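(* Let $A$ and $B$ be Banach algebras, $\phi\in\Delta(A)$ and $\psi\in\Delta(B)$. Suppose $A$ is unital and $B$ has an idempotent $x_0$ with $\psi(x_0)=1$. If $A\otimes_pB$ is approximately left $\phi\otimes\psi$-biprojective, then $A$ is approximately left $\phi$-biprojective.
   Context: $\Delta(A)$ is the set of characters of $A$. $A\otimes_pB$ is the projective tensor product Banach algebra with product $(a\otimes b)(c\otimes d)=ac\otimes bd$, and $\phi\otimes\psi\in\Delta(A\otimes_pB)$ is determined by $(\phi\otimes\psi)(a\otimes b)=\phi(a)\psi(b)$. For a Banach algebra $C$, $C\otimes_pC$ is a Banach $C$-bimodule via $c\cdot(x\otimes y)=cx\otimes y$, $(x\otimes y)\cdot c=x\otimes yc$, and $\pi_C(x\otimes y)=xy$. For $\theta\in\Delta(C)$, $C$ is approximately left $\theta$-biprojective if there is a net $(\rho_\alpha)$ of bounded linear maps $C\to C\otimes_pC$ such that for all $c,x\in C$: $\|c\cdot\rho_\alpha(x)-\rho_\alpha(cx)\|\to0$, $\|\rho_\alpha(xc)-\theta(c)\rho_\alpha(x)\|\to0$, and $\theta(\pi_C(\rho_\alpha(x)))-\theta(x)\to0$. *)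

From Stdlib Require Import Reals ClassicalEpsilon.
Open Scope R_scope.
Set Implicit Arguments.

Record Cx : Type := mkCx { Cre : R ; Cim : R }.
Definition Czero : Cx := mkCx 0 0.
Definition Cone : Cx := mkCx 1 0.
Definition Cadd (z w : Cx) : Cx := mkCx (Cre z + Cre w) (Cim z + Cim w).
Definition Copp (z : Cx) : Cx := mkCx (- Cre z) (- Cim z).
Definition Csub (z w : Cx) : Cx := Cadd z (Copp w).
Definition Cmul (z w : Cx) : Cx :=
  mkCx (Cre z * Cre w - Cim z * Cim w) (Cre z * Cim w + Cim z * Cre w).
Definition Cmod (z : Cx) : R := sqrt (Cre z * Cre z + Cim z * Cim z).

Record BanachSpace : Type := mkBS {
  bs_car :> Type;
  bs_zero : bs_car;
  bs_add : bs_car -> bs_car -> bs_car;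
  bs_opp : bs_car -> bs_car;
  bs_scal : Cx -> bs_car -> bs_car;
  bs_norm : bs_car -> R;
  bs_addA : forall x y z, bs_add x (bs_add y z) = bs_add (bs_add x y) z;
  bs_addC : forall x y, bs_add x y = bs_add y x;
  bs_add0 : forall x, bs_add x bs_zero = x;
  bs_addN : forall x, bs_add x (bs_opp x) = bs_zero;
  bs_scalA : forall a b x, bs_scal (Cmul a b) x = bs_scal a (bs_scal b x);
  bs_scal1 : forall x, bs_scal Cone x = x;
  bs_scalDr : forall a x y, bs_scal a (bs_add x y) = bs_add (bs_scal a x) (bs_scal a y);
  bs_scalDl : forall a b x, bs_scal (Cadd a b) x = bs_add (bs_scal a x) (bs_scal b x);
  bs_norm_eq0 : forall x, bs_norm x = 0 -> x = bs_zero;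
  bs_normZ : forall a x, bs_norm (bs_scal a x) = Cmod a * bs_norm x;
  bs_normD : forall x y, bs_norm (bs_add x y) <= bs_norm x + bs_norm y;
  bs_complete : forall u : nat -> bs_car,
    (forall eps, 0 < eps -> exists N, forall n m, (N <= n)%nat -> (N <= m)%nat ->
        bs_norm (bs_add (u n) (bs_opp (u m))) < eps) ->
    exists l, forall eps, 0 < eps -> exists N, forall n, (N <= n)%nat ->
        bs_norm (bs_add (u n) (bs_opp l)) < eps
}.

Arguments bs_zero {_}.
Arguments bs_add {_}.
Arguments bs_opp {_}.
Arguments bs_scal {_}.
Arguments bs_norm {_}.

Definition bs_sub {X : BanachSpace} (x y : X) : X := bs_add x (bs_opp y).

Record BanachAlgebra : Type := mkBA {
  ba_space :> BanachSpace;
  ba_mul : ba_space -> ba_space -> ba_space;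
  ba_mulA : forall x y z, ba_mul x (ba_mul y z) = ba_mul (ba_mul x y) z;
  ba_mulDl : forall x y z, ba_mul (bs_add x y) z = bs_add (ba_mul x z) (ba_mul y z);
  ba_mulDr : forall x y z, ba_mul x (bs_add y z) = bs_add (ba_mul x y) (ba_mul x z);
  ba_scal_mull : forall a x y, bs_scal a (ba_mul x y) = ba_mul (bs_scal a x) y;
  ba_scal_mulr : forall a x y, bs_scal a (ba_mul x y) = ba_mul x (bs_scal a y);
  ba_normM : forall x y, bs_norm (ba_mul x y) <= bs_norm x * bs_norm y
}.
Arguments ba_mul {_}.

Definition is_linear {X Y : BanachSpace} (f : X -> Y) : Prop :=
  (forall x y, f (bs_add x y) = bs_add (f x) (f y)) /\
  (forall a x, f (bs_scal a x) = bs_scal a (f x)).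

Definition bounded_linear {X Y : BanachSpace} (f : X -> Y) : Prop :=
  is_linear f /\ exists M, forall x, bs_norm (f x) <= M * bs_norm x.

Definition is_bilinear {X Y Z : BanachSpace} (T : X -> Y -> Z) : Prop :=
  (forall x x' y, T (bs_add x x') y = bs_add (T x y) (T x' y)) /\
  (forall a x y, T (bs_scal a x) y = bs_scal a (T x y)) /\
  (forall x y y', T x (bs_add y y') = bs_add (T x y) (T x y')) /\
  (forall a x y, T x (bs_scal a y) = bs_scal a (T x y)).

Definition is_character (A : BanachAlgebra) (phi : A -> Cx) : Prop :=
  (forall x y, phi (bs_add x y) = Cadd (phi x) (phi y)) /\
  (forall a x, phi (bs_scal a x) = Cmul a (phi x)) /\
  (forall x y, phi (ba_mul x y) = Cmul (phi x) (phi y)) /\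
  (exists x, phi x <> Czero).

(** * Projective tensor product, via its (isometric) universal property:
   t is bilinear with ||t a b|| <= ||a|| ||b||, and every bounded bilinear
   T : X x Y -> E with ||T|| <= M factors uniquely through a bounded linear
   map P -> E of norm <= M.  This determines (P, t) up to isometric
   isomorphism as the completed projective tensor product X (x)_p Y. *)
Definition is_proj_tensor (X Y P : BanachSpace) (t : X -> Y -> P) : Prop :=
  is_bilinear t /\
  (forall x y, bs_norm (t x y) <= bs_norm x * bs_norm y) /\
  (forall (E : BanachSpace) (T : X -> Y -> E) (M : R),
     is_bilinear T ->
     (forall x y, bs_norm (T x y) <= M * (bs_norm x * bs_norm y)) ->
     exists L : P -> E,
       is_linear L /\ (forall z, bs_norm (L z) <= M * bs_norm z) /\
       (forall x y, L (t x y) = T x y) /\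
       (forall L' : P -> E, bounded_linear L' ->
          (forall x y, L' (t x y) = T x y) -> forall z, L' z = L z)).

Definition is_proj_tensor_alg (A B P : BanachAlgebra) (t : A -> B -> P) : Prop :=
  is_proj_tensor A B P t /\
  (forall a b c d, ba_mul (t a b) (t c d) = t (ba_mul a c) (ba_mul b d)).

Definition tens_lact {C : BanachAlgebra} {Q : BanachSpace} (tQ : C -> C -> Q)
    (c : C) : Q -> Q :=
  epsilon (inhabits (fun z : Q => z))
    (fun L : Q -> Q => bounded_linear L /\
       forall x y, L (tQ x y) = tQ (ba_mul c x) y).

Definition tens_ract {C : BanachAlgebra} {Q : BanachSpace} (tQ : C -> C -> Q)
    (c : C) : Q -> Q :=
  epsilon (inhabits (fun z : Q => z))
    (fun L : Q -> Q => bounded_linear L /\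
       forall x y, L (tQ x y) = tQ x (ba_mul y c)).

Definition tens_pi {C : BanachAlgebra} {Q : BanachSpace} (tQ : C -> C -> Q) : Q -> C :=
  epsilon (inhabits (fun _ : Q => (bs_zero : C)))
    (fun L : Q -> C => bounded_linear L /\
       forall x y, L (tQ x y) = ba_mul x y).

Record DirectedSet : Type := {
  ds_car :> Type;
  ds_le : ds_car -> ds_car -> Prop;
  ds_refl : forall i, ds_le i i;
  ds_trans : forall i j k, ds_le i j -> ds_le j k -> ds_le i k;
  ds_upper : forall i j, exists k, ds_le i k /\ ds_le j k;
  ds_inhab : ds_car
}.

Definition net_to0 {I : DirectedSet} (f : I -> R) : Prop :=
  forall eps, 0 < eps -> exists i0, forall i, ds_le I i0 i -> Rabs (f i) < eps.

Definition approx_left_biproj (C : BanachAlgebra) (theta : C -> Cx) : Prop :=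
  forall (Q : BanachSpace) (tQ : C -> C -> Q), is_proj_tensor C C Q tQ ->
  exists (I : DirectedSet) (rho : I -> C -> Q),
    (forall i, bounded_linear (rho i)) /\
    (forall c x : C, net_to0 (fun i =>
        bs_norm (bs_sub (tens_lact tQ c (rho i x)) (rho i (ba_mul c x))))) /\
    (forall c x : C, net_to0 (fun i =>
        bs_norm (bs_sub (rho i (ba_mul x c)) (bs_scal (theta c) (rho i x))))) /\
    (forall x : C, net_to0 (fun i =>
        Cmod (Csub (theta (tens_pi tQ (rho i x))) (theta x)))).

(* The slice map S : A (x)_p B -> A, a (x) b |-> psi(b) a, is a contractive algebra
   homomorphism with phi o S = chi, and j : a |-> a (x) x0 is an algebra homomorphism
   (x0 being idempotent) with S o j = id.  Approximate left biprojectivity passes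
   from P along such a retraction: if (rho_i) works for P, then (S (x) S) o rho_i o j
   works for A.

   The definition of approximate biprojectivity quantifies over every projective
   tensor product of the algebra with itself, so the argument needs one for
   P (x)_p P.  It is built as the space of absolutely summable series
   sum_k sum_{(x,y) in w_k} x (x) y, identified when every bounded bilinear map
   sums them to the same value, with the infimum of sum ||x|| ||y|| as norm. *)

From Stdlib Require Import Reals Lra Lia Psatz List ClassicalEpsilon
  FunctionalExtensionality PropExtensionality ProofIrrelevance Classical.
Open Scope R_scope.

Arguments bs_addA {_}. Arguments bs_addC {_}. Arguments bs_add0 {_}. Arguments bs_addN {_}.
Arguments bs_scalA {_}. Arguments bs_scal1 {_}. Arguments bs_scalDr {_}. Arguments bs_scalDl {_}.
Arguments bs_norm_eq0 {_}. Arguments bs_normZ {_}. Arguments bs_normD {_}.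
Arguments bs_complete {_}.
Arguments ba_mulA {_}. Arguments ba_mulDl {_}. Arguments ba_mulDr {_}.
Arguments ba_scal_mull {_}. Arguments ba_scal_mulr {_}. Arguments ba_normM {_}.

Lemma Cx_ext (a b c d : R) : a = c -> b = d -> mkCx a b = mkCx c d.
Proof. now intros -> ->. Qed.

Lemma Cmod_ge0 z : 0 <= Cmod z.
Proof. apply sqrt_pos. Qed.

Lemma Cmod_sqr z : Cmod z * Cmod z = Cre z * Cre z + Cim z * Cim z.
Proof. unfold Cmod; rewrite sqrt_sqrt; nra. Qed.

Lemma Cmod_unique (z : Cx) (r : R) :
  0 <= r -> r * r = Cre z * Cre z + Cim z * Cim z -> Cmod z = r.
Proof. intros Hr Hsq. unfold Cmod. rewrite <- Hsq. now apply sqrt_square. Qed.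

Lemma CmodM a b : Cmod (Cmul a b) = Cmod a * Cmod b.
Proof.
  apply Cmod_unique; [apply Rmult_le_pos; apply Cmod_ge0|].
  replace (Cmod a * Cmod b * (Cmod a * Cmod b))
    with ((Cmod a * Cmod a) * (Cmod b * Cmod b)) by ring.
  rewrite !Cmod_sqr. destruct a, b; simpl. ring.
Qed.

Lemma Cmod0 : Cmod Czero = 0.
Proof. apply Cmod_unique; simpl; lra. Qed.

Lemma Cmod1 : Cmod Cone = 1.
Proof. apply Cmod_unique; simpl; lra. Qed.

Lemma CmodN1 : Cmod (Copp Cone) = 1.
Proof. apply Cmod_unique; simpl; lra. Qed.

Lemma Cmod_eq0 z : Cmod z = 0 -> z = Czero.
Proof.
  intro H. pose proof (Cmod_sqr z) as E. rewrite H in E.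
  destruct z as [x y]; simpl in *. apply Cx_ext; nra.
Qed.

Definition Cinv (z : Cx) : Cx :=
  mkCx (Cre z / (Cre z * Cre z + Cim z * Cim z))
       (- Cim z / (Cre z * Cre z + Cim z * Cim z)).

Lemma Cinv_l z : z <> Czero -> Cmul (Cinv z) z = Cone.
Proof.
  intro Hz. destruct z as [x y].
  assert (0 < x * x + y * y).
  { destruct (Req_dec x 0), (Req_dec y 0); try nra. subst; easy. }
  unfold Cinv, Cmul, Cone; simpl. apply Cx_ext; field; lra.
Qed.

Lemma Cmod_inv z : z <> Czero -> Cmod (Cinv z) * Cmod z = 1.
Proof. intro Hz. now rewrite <- CmodM, Cinv_l, Cmod1. Qed.

Lemma Cmul_comm a b : Cmul a b = Cmul b a.
Proof. destruct a, b; apply Cx_ext; simpl; ring. Qed.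

Lemma Cmul_1_l a : Cmul Cone a = a.
Proof. destruct a; apply Cx_ext; simpl; ring. Qed.

Lemma Cadd_neq_1_l a : Cadd Cone a <> a.
Proof. destruct a; intro H; injection H; simpl; lra. Qed.

Section BanachSpaceTheory.
Context {X : BanachSpace}.
Implicit Types x y z : X.

Lemma add0l x : bs_add bs_zero x = x.
Proof. rewrite bs_addC; apply bs_add0. Qed.

Lemma addNl x : bs_add (bs_opp x) x = bs_zero.
Proof. rewrite bs_addC; apply bs_addN. Qed.

Lemma addIr x y z : bs_add x y = bs_add x z -> y = z.
Proof.
  intro H. now rewrite <- (add0l y), <- (add0l z), <- (addNl x), <- !bs_addA, H.
Qed.

Lemma addr_eq_l x y : bs_add x y = x -> y = bs_zero.
Proof. intro H. apply (addIr x). now rewrite H, bs_add0. Qed.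

Lemma opp_unique x y : bs_add x y = bs_zero -> y = bs_opp x.
Proof. intro H. apply (addIr x). now rewrite H, bs_addN. Qed.

Lemma oppK x : bs_opp (bs_opp x) = x.
Proof. symmetry. apply opp_unique, addNl. Qed.

Lemma opp0 : bs_opp (bs_zero : X) = bs_zero.
Proof. symmetry. apply opp_unique, bs_add0. Qed.

Lemma oppD x y : bs_opp (bs_add x y) = bs_add (bs_opp x) (bs_opp y).
Proof.
  symmetry. apply opp_unique.
  now rewrite (bs_addC (bs_opp x)), bs_addA, <- (bs_addA x y), bs_addN, bs_add0, bs_addN.
Qed.

Lemma scal0 a : bs_scal a (bs_zero : X) = bs_zero.
Proof. apply (addr_eq_l (bs_scal a bs_zero)). now rewrite <- bs_scalDr, bs_add0. Qed.

Lemma scal0l x : bs_scal Czero x = bs_zero.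
Proof.
  apply (addr_eq_l (bs_scal Czero x)). rewrite <- bs_scalDl. f_equal.
  apply Cx_ext; simpl; ring.
Qed.

Lemma opp_scalN1 x : bs_opp x = bs_scal (Copp Cone) x.
Proof.
  symmetry. apply opp_unique. rewrite <- (bs_scal1 x) at 1. rewrite <- bs_scalDl.
  replace (Cadd Cone (Copp Cone)) with Czero by (apply Cx_ext; simpl; ring).
  apply scal0l.
Qed.

Lemma scalN a x : bs_scal a (bs_opp x) = bs_opp (bs_scal a x).
Proof. apply opp_unique. rewrite <- bs_scalDr, bs_addN. apply scal0. Qed.

Lemma norm0 : bs_norm (bs_zero : X) = 0.
Proof. now rewrite <- (scal0l bs_zero), bs_normZ, Cmod0, Rmult_0_l. Qed.

Lemma normN x : bs_norm (bs_opp x) = bs_norm x.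
Proof. rewrite opp_scalN1, bs_normZ, CmodN1. ring. Qed.

Lemma norm_ge0 x : 0 <= bs_norm x.
Proof. pose proof (bs_normD x (bs_opp x)). rewrite bs_addN, norm0, normN in H. lra. Qed.

Lemma norm_le_eps_eq0 x : (forall eps, 0 < eps -> bs_norm x <= eps) -> x = bs_zero.
Proof.
  intro H. apply bs_norm_eq0. pose proof (norm_ge0 x).
  destruct (Req_dec (bs_norm x) 0); auto. specialize (H (bs_norm x / 2)). lra.
Qed.

Lemma subrr x : bs_sub x x = bs_zero.
Proof. apply bs_addN. Qed.

Lemma subr0 x : bs_sub x bs_zero = x.
Proof. unfold bs_sub. now rewrite opp0, bs_add0. Qed.

Lemma subr_eq0 x y : bs_sub x y = bs_zero -> x = y.
Proof. intro H. apply opp_unique in H. now rewrite <- (oppK y), H, oppK. Qed.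

Lemma subr_chain x y z : bs_sub x z = bs_add (bs_sub x y) (bs_sub y z).
Proof. unfold bs_sub. now rewrite <- bs_addA, (bs_addA (bs_opp y)), addNl, add0l. Qed.

Lemma opp_subr x y : bs_sub x y = bs_opp (bs_sub y x).
Proof. unfold bs_sub. now rewrite oppD, oppK, bs_addC. Qed.

Lemma norm_subC x y : bs_norm (bs_sub x y) = bs_norm (bs_sub y x).
Proof. now rewrite opp_subr, normN. Qed.

Lemma norm_sub_triangle x y z :
  bs_norm (bs_sub x z) <= bs_norm (bs_sub x y) + bs_norm (bs_sub y z).
Proof. rewrite (subr_chain x y z). apply bs_normD. Qed.

Lemma sub_addD x y x' y' :
  bs_sub (bs_add x y) (bs_add x' y') = bs_add (bs_sub x x') (bs_sub y y').
Proof.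
  unfold bs_sub. rewrite oppD, !bs_addA. f_equal.
  rewrite <- !bs_addA. f_equal. apply bs_addC.
Qed.

End BanachSpaceTheory.

Lemma le_epsilon_R (a b : R) : (forall eps, 0 < eps -> a <= b + eps) -> a <= b.
Proof. intro H. destruct (Rle_dec a b); auto. specialize (H ((a - b) / 2)). lra. Qed.

Lemma Rmult_div_succ_le (a e : R) : 0 <= a -> 0 < e -> a * (e / (a + 1)) <= e.
Proof.
  intros Ha He. apply (Rmult_le_reg_r (a + 1)); [lra|].
  replace (a * (e / (a + 1)) * (a + 1)) with (a * e) by (field; lra). nra.
Qed.

Lemma lin0 {X Y : BanachSpace} (f : X -> Y) : is_linear f -> f bs_zero = bs_zero.
Proof. intros [Ha _]. apply (addr_eq_l (f bs_zero)). now rewrite <- Ha, bs_add0. Qed.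

Lemma linN {X Y : BanachSpace} (f : X -> Y) x : is_linear f -> f (bs_opp x) = bs_opp (f x).
Proof.
  intro Hf. apply opp_unique. rewrite <- (proj1 Hf), bs_addN. now apply lin0.
Qed.

Lemma linB {X Y : BanachSpace} (f : X -> Y) x y :
  is_linear f -> f (bs_sub x y) = bs_sub (f x) (f y).
Proof. intro Hf. unfold bs_sub. now rewrite (proj1 Hf), linN. Qed.

Fixpoint psum {X : BanachSpace} (f : nat -> X) (n : nat) : X :=
  match n with O => bs_zero | S n => bs_add (psum f n) (f n) end.

Fixpoint rsum (a : nat -> R) (n : nat) : R :=
  match n with O => 0 | S n => rsum a n + a n end.

Definition has_sum {X : BanachSpace} (f : nat -> X) (l : X) : Prop :=
  forall eps, 0 < eps -> exists N, forall n, (N <= n)%nat ->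
    bs_norm (bs_sub (psum f n) l) < eps.

Lemma rsum_le a b n : (forall k, a k <= b k) -> rsum a n <= rsum b n.
Proof. intro H. induction n; simpl; [lra|]. specialize (H n). lra. Qed.

Lemma rsum_mono a n m : (forall k, 0 <= a k) -> (n <= m)%nat -> rsum a n <= rsum a m.
Proof. intros H Hm. induction Hm; simpl; [lra|]. specialize (H m). lra. Qed.

Lemma rsum_ext a b n : (forall k, a k = b k) -> rsum a n = rsum b n.
Proof. intro H. induction n; simpl; auto. now rewrite IHn, H. Qed.

Lemma rsumZ c a n : rsum (fun k => c * a k) n = c * rsum a n.
Proof. induction n; simpl; [ring|]. rewrite IHn; ring. Qed.

Lemma rsumD a b n : rsum (fun k => a k + b k) n = rsum a n + rsum b n.
Proof. induction n; simpl; [ring|]. rewrite IHn; ring. Qed.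

Lemma rsum_cauchy_tail a C : (forall k, 0 <= a k) -> (forall n, rsum a n <= C) ->
  forall eps, 0 < eps -> exists N, forall n m, (N <= n)%nat -> (n <= m)%nat ->
    rsum a m - rsum a n < eps.
Proof.
  intros Ha HC eps Heps.
  assert (Hg : Un_growing (rsum a)) by (intro n; simpl; specialize (Ha n); lra).
  assert (Hb : bound (EUn (rsum a))) by (exists C; intros x [n ->]; auto).
  destruct (growing_cv _ Hg Hb) as [l Hl].
  destruct (CV_Cauchy _ (exist _ l Hl) eps Heps) as [N HN]. exists N. intros n m Hn Hm.
  specialize (HN m n ltac:(lia) ltac:(lia)). unfold R_dist in HN.
  pose proof (rsum_mono a n m Ha Hm). rewrite Rabs_right in HN; lra.
Qed.

Section SeriesTheory.
Context {X : BanachSpace}.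
Implicit Types (f g : nat -> X) (l : X).

Lemma has_sum_unique f l l' : has_sum f l -> has_sum f l' -> l = l'.
Proof.
  intros H1 H2. apply subr_eq0, norm_le_eps_eq0. intros eps Heps.
  destruct (H1 (eps / 2)) as [N1 HN1]; [lra|]. destruct (H2 (eps / 2)) as [N2 HN2]; [lra|].
  specialize (HN1 (N1 + N2)%nat ltac:(lia)). specialize (HN2 (N1 + N2)%nat ltac:(lia)).
  pose proof (norm_sub_triangle l (psum f (N1 + N2)) l').
  rewrite (norm_subC l (psum f _)) in H. lra.
Qed.

Lemma has_sum_ext f g l : (forall n, f n = g n) -> has_sum f l -> has_sum g l.
Proof. intro H. now replace g with f by (apply functional_extensionality; auto). Qed.

Lemma psumD f g n : psum (fun k => bs_add (f k) (g k)) n = bs_add (psum f n) (psum g n).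
Proof.
  induction n; simpl; [now rewrite bs_add0|].
  rewrite IHn, <- !bs_addA. f_equal. rewrite !bs_addA. f_equal. apply bs_addC.
Qed.

Lemma has_sumD f g l l' :
  has_sum f l -> has_sum g l' -> has_sum (fun k => bs_add (f k) (g k)) (bs_add l l').
Proof.
  intros H1 H2 eps Heps.
  destruct (H1 (eps / 2)) as [N1 HN1]; [lra|]. destruct (H2 (eps / 2)) as [N2 HN2]; [lra|].
  exists (N1 + N2)%nat. intros n Hn. rewrite psumD, sub_addD.
  eapply Rle_lt_trans; [apply bs_normD|].
  specialize (HN1 n ltac:(lia)). specialize (HN2 n ltac:(lia)). lra.
Qed.

Lemma psum_eq_lt f g n : (forall k, (k < n)%nat -> f k = g k) -> psum f n = psum g n.
Proof. intro H. induction n; simpl; auto. rewrite IHn, H; auto. Qed.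

Lemma has_sum_stable f n :
  (forall k, (n <= k)%nat -> f k = bs_zero) -> has_sum f (psum f n).
Proof.
  intros H eps Heps. exists n. intros m Hm.
  replace (psum f m) with (psum f n); [now rewrite subrr, norm0|].
  induction Hm; auto. simpl. now rewrite H, bs_add0 by lia.
Qed.

Lemma psum_sub_norm f a n m : (forall k, bs_norm (f k) <= a k) -> (n <= m)%nat ->
  bs_norm (bs_sub (psum f m) (psum f n)) <= rsum a m - rsum a n.
Proof.
  intros H Hm. induction Hm; [rewrite subrr, norm0; lra|]. simpl.
  replace (bs_sub (bs_add (psum f m) (f m)) (psum f n))
    with (bs_add (bs_sub (psum f m) (psum f n)) (f m)).
  - eapply Rle_trans; [apply bs_normD|]. specialize (H m). lra.
  - unfold bs_sub. rewrite <- !bs_addA. f_equal. apply bs_addC.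
Qed.

Lemma psum_norm f a n : (forall k, bs_norm (f k) <= a k) -> bs_norm (psum f n) <= rsum a n.
Proof.
  intro H. pose proof (psum_sub_norm f a 0 n H ltac:(lia)). simpl in H0.
  rewrite subr0 in H0. lra.
Qed.

Lemma has_sum_norm_le f l B : has_sum f l -> (forall n, bs_norm (psum f n) <= B) ->
  bs_norm l <= B.
Proof.
  intros H HB. apply le_epsilon_R. intros eps Heps. destruct (H eps Heps) as [N HN].
  specialize (HN N (le_n _)). specialize (HB N).
  pose proof (norm_sub_triangle l (psum f N) bs_zero). rewrite !subr0, norm_subC in H0. lra.
Qed.

Lemma has_sum_dominated f a C :
  (forall k, bs_norm (f k) <= a k) -> (forall n, rsum a n <= C) -> exists l, has_sum f l.
Proof.
  intros H HC.
  assert (Ha : forall k, 0 <= a k) by (intro k; pose proof (norm_ge0 (f k)); specialize (H k); lra).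
  destruct (bs_complete (psum f)) as [l Hl]; [|now exists l].
  intros eps Heps. destruct (rsum_cauchy_tail a C Ha HC eps Heps) as [N HN].
  exists N. intros n m Hn Hm. change (bs_norm (bs_sub (psum f n) (psum f m)) < eps).
  destruct (Compare_dec.le_ge_dec n m).
  - rewrite norm_subC. eapply Rle_lt_trans; [apply psum_sub_norm; eauto|]. apply HN; lia.
  - eapply Rle_lt_trans; [apply psum_sub_norm; eauto|]. apply HN; lia.
Qed.

End SeriesTheory.

Definition half_pow (k : nat) : R := (/ 2) ^ k.

Lemma half_pow_pos k : 0 < half_pow k.
Proof. apply pow_lt. lra. Qed.

Lemma half_pow_S k : half_pow (S k) = half_pow k / 2.
Proof. unfold half_pow. simpl. field. Qed.

Lemma rsum_half_pow_tail N n :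
  rsum (fun k => if Nat.ltb k N then 0 else half_pow k) n <= 2 * half_pow N.
Proof.
  assert (H : rsum (fun k => if Nat.ltb k N then 0 else half_pow k) n
              <= 2 * half_pow N - 2 * half_pow (max n N)).
  { induction n; simpl rsum.
    - replace (max 0 N) with N by lia. lra.
    - destruct (Nat.ltb_spec n N).
      + replace (max (S n) N) with N by lia. replace (max n N) with N in IHn by lia. lra.
      + replace (max (S n) N) with (S n) by lia. replace (max n N) with n in IHn by lia.
        rewrite half_pow_S. lra. }
  pose proof (half_pow_pos (max n N)). lra.
Qed.

Fixpoint running_max (f : nat -> nat) (k : nat) : nat :=
  match k with O => f O | S k => max (running_max f k) (f (S k)) end.

Lemma cauchy_modulus (d : nat -> nat -> R) :
  (forall eps, 0 < eps -> exists N, forall n m, (N <= n)%nat -> (N <= m)%nat -> d n m < eps) ->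
  exists N : nat -> nat, (forall k, (N k <= N (S k))%nat) /\
    forall k n m, (N k <= n)%nat -> (N k <= m)%nat -> d n m < half_pow k.
Proof.
  intro Hc.
  pose (f := fun k => proj1_sig (constructive_indefinite_description _ (Hc _ (half_pow_pos k)))).
  assert (Hf : forall k n m, (f k <= n)%nat -> (f k <= m)%nat -> d n m < half_pow k).
  { intro k. unfold f. now destruct (constructive_indefinite_description _ _). }
  exists (running_max f). split; [intro k; simpl; lia|].
  intros k n m Hn Hm. assert ((f k <= running_max f k)%nat) by (destruct k; simpl; lia).
  apply Hf; lia.
Qed.

Lemma bounded_linear_nonneg {X Y : BanachSpace} (f : X -> Y) :
  bounded_linear f -> exists K, 0 <= K /\ forall x, bs_norm (f x) <= K * bs_norm x.
Proof.
  intros [_ [K HK]]. exists (Rabs K). split; [apply Rabs_pos|]. intro x.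
  eapply Rle_trans; [apply HK|]. apply Rmult_le_compat_r; [apply norm_ge0|apply Rle_abs].
Qed.

Lemma bounded_linear_comp {X Y Z : BanachSpace} (f : X -> Y) (g : Y -> Z) :
  bounded_linear f -> bounded_linear g -> bounded_linear (fun x => g (f x)).
Proof.
  intros Hf Hg.
  destruct (bounded_linear_nonneg f Hf) as [Kf [Kf0 HKf]].
  destruct (bounded_linear_nonneg g Hg) as [Kg [Kg0 HKg]].
  destruct Hf as [[Hf1 Hf2] _], Hg as [[Hg1 Hg2] _].
  split; [split|]; intros.
  - now rewrite Hf1, Hg1.
  - now rewrite Hf2, Hg2.
  - exists (Kg * Kf). intro x. eapply Rle_trans; [apply HKg|].
    rewrite Rmult_assoc. apply Rmult_le_compat_l; auto.
Qed.

Lemma psum_lin {X Y : BanachSpace} (g : X -> Y) (f : nat -> X) n :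
  is_linear g -> psum (fun k => g (f k)) n = g (psum f n).
Proof.
  intro Hg. induction n; simpl; [symmetry; now apply lin0|].
  now rewrite IHn, (proj1 Hg).
Qed.

Lemma has_sum_lin {X Y : BanachSpace} (g : X -> Y) (f : nat -> X) l :
  bounded_linear g -> has_sum f l -> has_sum (fun k => g (f k)) (g l).
Proof.
  intros Hg H eps Heps. destruct (bounded_linear_nonneg g Hg) as [K [K0 HK]].
  destruct (H (eps / (K + 1))) as [N HN]; [apply Rdiv_lt_0_compat; lra|].
  exists N. intros n Hn.
  rewrite psum_lin, <- linB by apply Hg.
  eapply Rle_lt_trans; [apply HK|]. specialize (HN n Hn).
  pose proof (norm_ge0 (bs_sub (psum f n) l)).
  apply (Rmult_lt_compat_l (K + 1)) in HN; [|lra].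
  replace ((K + 1) * (eps / (K + 1))) with eps in HN by (field; lra). nra.
Qed.

Lemma lmul_bounded_linear (A : BanachAlgebra) (y : A) : bounded_linear (fun x : A => ba_mul y x).
Proof.
  split; [split|]; intros.
  - apply ba_mulDr.
  - symmetry; apply ba_scal_mulr.
  - exists (bs_norm y). intro; apply ba_normM.
Qed.

Lemma rmul_bounded_linear (A : BanachAlgebra) (y : A) : bounded_linear (fun x : A => ba_mul x y).
Proof.
  split; [split|]; intros.
  - apply ba_mulDl.
  - symmetry; apply ba_scal_mull.
  - exists (bs_norm y). intro. rewrite Rmult_comm. apply ba_normM.
Qed.

(** [ba_spow y n] is y^(n+1). *)
Fixpoint ba_spow {A : BanachAlgebra} (y : A) (n : nat) : A :=
  match n with O => y | S n => ba_mul y (ba_spow y n) end.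

Lemma ba_spow_norm {A : BanachAlgebra} (y : A) n :
  bs_norm (ba_spow y n) <= bs_norm y ^ (S n).
Proof.
  induction n; simpl; [lra|]. eapply Rle_trans; [apply ba_normM|].
  apply Rmult_le_compat_l; [apply norm_ge0|exact IHn].
Qed.

Lemma rsum_geometric r n : 0 <= r < 1 -> rsum (fun k => r ^ (S k)) n <= r / (1 - r).
Proof.
  intro Hr.
  assert (Hsum : rsum (fun k => r ^ (S k)) n * (1 - r) = r - r ^ (S n)).
  { induction n; simpl in *; [ring|].
    transitivity (rsum (fun k => r * r ^ k) n * (1 - r) + r * r ^ n * (1 - r)); [ring|].
    rewrite IHn. ring. }
  pose proof (pow_le r (S n) (proj1 Hr)).
  apply (Rmult_le_reg_r (1 - r)); [lra|].
  rewrite Hsum. unfold Rdiv. rewrite Rmult_assoc, Rinv_l by lra. lra.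
Qed.

Lemma neumann_series_eq {A : BanachAlgebra} (y z : A) :
  has_sum (ba_spow y) z -> z = bs_add y (ba_mul y z).
Proof.
  intro Hz. apply (has_sum_unique (ba_spow y)); auto.
  pose proof (has_sum_lin _ _ _ (lmul_bounded_linear A y) Hz) as Hs.
  intros eps Heps. destruct (Hs eps Heps) as [N HN]. exists (S N). intros [|n] Hn; [lia|].
  assert (Hshift : forall m, psum (ba_spow y) (S m)
                      = bs_add y (psum (fun k => ba_mul y (ba_spow y k)) m)).
  { induction m; simpl in *; [now rewrite add0l, bs_add0|]. now rewrite IHm, bs_addA. }
  rewrite Hshift, sub_addD, subrr, add0l. apply HN. lia.
Qed.

(** If [phi y = 1] with [||y|| < 1], the Neumann series [z] of [y] satisfies
    [z = y + y z], so [phi z = 1 + phi z]. *)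
Lemma character_contractive (A : BanachAlgebra) (phi : A -> Cx) :
  is_character A phi -> forall x, Cmod (phi x) <= bs_norm x.
Proof.
  intros [Hadd [Hsc [Hmul _]]] b.
  destruct (Rle_dec (Cmod (phi b)) (bs_norm b)) as [|Hlt%Rnot_le_lt]; auto. exfalso.
  assert (Hnz : phi b <> Czero).
  { intro E. rewrite E, Cmod0 in Hlt. pose proof (norm_ge0 b). lra. }
  set (y := bs_scal (Cinv (phi b)) b).
  assert (Hy1 : phi y = Cone) by (unfold y; rewrite Hsc; now apply Cinv_l).
  pose proof (Cmod_inv _ Hnz) as Hci.
  assert (Hr : 0 <= bs_norm y < 1).
  { split; [apply norm_ge0|]. unfold y. rewrite bs_normZ.
    pose proof (Cmod_ge0 (Cinv (phi b))). pose proof (norm_ge0 b). nra. }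
  destruct (has_sum_dominated (ba_spow y) (fun k => bs_norm y ^ (S k))
              (bs_norm y / (1 - bs_norm y)) (ba_spow_norm y)
              (fun n => rsum_geometric _ n Hr)) as [z Hz].
  apply (Cadd_neq_1_l (phi z)). symmetry.
  now rewrite (neumann_series_eq y z Hz) at 1; rewrite Hadd, Hmul, Hy1, Cmul_1_l.
Qed.

(** * Existence of projective tensor products *)

Section ProjectiveTensor.
Context {X Y : BanachSpace}.

(** A tensor is represented by a series of finite blocks of elementary tensors. *)
Definition rep := nat -> list (X * Y).

Definition list_eval {E : BanachSpace} (T : X -> Y -> E) (l : list (X * Y)) : E :=
  fold_right (fun p acc => bs_add (T (fst p) (snd p)) acc) bs_zero l.

Definition list_cost (l : list (X * Y)) : R :=
  fold_right (fun p acc => bs_norm (fst p) * bs_norm (snd p) + acc) 0 l.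

Definition rep_terms {E : BanachSpace} (T : X -> Y -> E) (w : rep) : nat -> E :=
  fun k => list_eval T (w k).

Definition rep_cost (w : rep) (n : nat) : R := rsum (fun k => list_cost (w k)) n.

Definition summable (w : rep) : Prop := exists C, forall n, rep_cost w n <= C.

Definition bounded_bilinear {E : BanachSpace} (T : X -> Y -> E) (M : R) : Prop :=
  is_bilinear T /\ forall x y, bs_norm (T x y) <= M * (bs_norm x * bs_norm y).

Definition rep_equiv (w w' : rep) : Prop :=
  forall (E : BanachSpace) (T : X -> Y -> E) (M : R), bounded_bilinear T M ->
  forall l l', has_sum (rep_terms T w) l -> has_sum (rep_terms T w') l' -> l = l'.

Definition list_opp (l : list (X * Y)) : list (X * Y) :=
  map (fun p => (bs_opp (fst p), snd p)) l.

Definition list_scal (a : Cx) (l : list (X * Y)) : list (X * Y) :=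
  map (fun p => (bs_scal a (fst p), snd p)) l.

Lemma list_cost_ge0 l : 0 <= list_cost l.
Proof.
  induction l as [|[x y] l IH]; simpl; [lra|].
  pose proof (Rmult_le_pos _ _ (norm_ge0 x) (norm_ge0 y)). lra.
Qed.

Lemma list_cost_app l l' : list_cost (l ++ l') = list_cost l + list_cost l'.
Proof. induction l; simpl; [lra|]. rewrite IHl. lra. Qed.

Lemma list_cost_opp l : list_cost (list_opp l) = list_cost l.
Proof. induction l; simpl; auto. now rewrite normN, IHl. Qed.

Lemma list_cost_scal a l : list_cost (list_scal a l) = Cmod a * list_cost l.
Proof. induction l; simpl; [ring|]. rewrite bs_normZ, IHl; ring. Qed.

Section ListEval.
Context {E : BanachSpace} (T : X -> Y -> E).

Lemma list_eval_app l l' : list_eval T (l ++ l') = bs_add (list_eval T l) (list_eval T l').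
Proof.
  induction l; simpl; [now rewrite add0l|]. unfold list_eval in *; simpl.
  now rewrite IHl, bs_addA.
Qed.

Lemma list_eval1 x y : list_eval T ((x, y) :: nil) = T x y.
Proof. apply bs_add0. Qed.

Hypothesis T_bilinear : is_bilinear T.

Lemma list_eval_opp l : list_eval T (list_opp l) = bs_opp (list_eval T l).
Proof.
  destruct T_bilinear as [Tadd _].
  induction l as [|[x y] l IH]; simpl; [now rewrite opp0|]. unfold list_eval in *; simpl.
  rewrite IH, oppD. f_equal. apply opp_unique.
  now rewrite <- Tadd, bs_addN, <- (scal0l bs_zero), (proj1 (proj2 T_bilinear)), scal0l.
Qed.

Lemma list_eval_scal a l : list_eval T (list_scal a l) = bs_scal a (list_eval T l).
Proof.
  induction l; simpl; [now rewrite scal0|]. unfold list_eval in *; simpl.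
  now rewrite IHl, bs_scalDr, (proj1 (proj2 T_bilinear)).
Qed.

Lemma list_eval_norm M l : (forall x y, bs_norm (T x y) <= M * (bs_norm x * bs_norm y)) ->
  bs_norm (list_eval T l) <= Rabs M * list_cost l.
Proof.
  intro HM. induction l as [|[x y] l IH]; simpl; [rewrite norm0; lra|].
  eapply Rle_trans; [apply bs_normD|].
  pose proof (Rmult_le_pos _ _ (norm_ge0 x) (norm_ge0 y)).
  pose proof (Rmult_le_compat_r _ _ _ H (Rle_abs M)). specialize (HM x y). nra.
Qed.

End ListEval.

Lemma rep_cost_mono w n m : (n <= m)%nat -> rep_cost w n <= rep_cost w m.
Proof. intro. apply rsum_mono; auto. intro; apply list_cost_ge0. Qed.

Lemma rep_sum_exists {E : BanachSpace} (T : X -> Y -> E) M w :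
  summable w -> bounded_bilinear T M -> exists l, has_sum (rep_terms T w) l.
Proof.
  intros [C HC] [_ HM].
  apply has_sum_dominated with (a := fun k => Rabs M * list_cost (w k)) (C := Rabs M * C).
  - intro k. now apply list_eval_norm.
  - intro n. rewrite rsumZ. apply Rmult_le_compat_l; [apply Rabs_pos|apply HC].
Qed.

Lemma rep_sum_norm {E : BanachSpace} (T : X -> Y -> E) M w l c :
  bounded_bilinear T M -> has_sum (rep_terms T w) l -> (forall n, rep_cost w n <= c) ->
  bs_norm l <= Rabs M * c.
Proof.
  intros [_ HM] Hl Hc. apply (has_sum_norm_le _ _ _ Hl). intro n.
  eapply Rle_trans; [apply psum_norm with (a := fun k => Rabs M * list_cost (w k))|].
  - intro k. now apply list_eval_norm.
  - rewrite rsumZ. apply Rmult_le_compat_l; [apply Rabs_pos|apply Hc].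
Qed.


Definition rep_zero : rep := fun _ => nil.
Definition rep_add (w w' : rep) : rep := fun k => w k ++ w' k.
Definition rep_opp (w : rep) : rep := fun k => list_opp (w k).
Definition rep_scal a (w : rep) : rep := fun k => list_scal a (w k).
Definition rep_sub (w w' : rep) : rep := rep_add w (rep_opp w').
Definition rep_block (l : list (X * Y)) : rep := fun k => match k with O => l | _ => nil end.
Definition rep_trunc n (w : rep) : rep := fun k => if Nat.ltb k n then w k else nil.
Definition rep_tail n (w : rep) : rep := fun k => if Nat.ltb k n then nil else w k.

Fixpoint rep_flatten (w : rep) (n : nat) : list (X * Y) :=
  match n with O => nil | S n => rep_flatten w n ++ w n end.

Lemma rep_cost_zero n : rep_cost rep_zero n = 0.
Proof. unfold rep_cost. induction n; simpl in *; lra. Qed.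

Lemma rep_cost_add w w' n : rep_cost (rep_add w w') n = rep_cost w n + rep_cost w' n.
Proof. unfold rep_cost. rewrite <- rsumD. apply rsum_ext. intro; apply list_cost_app. Qed.

Lemma rep_cost_scal a w n : rep_cost (rep_scal a w) n = Cmod a * rep_cost w n.
Proof. unfold rep_cost. rewrite <- rsumZ. apply rsum_ext. intro; apply list_cost_scal. Qed.

Lemma rep_cost_block l n : rep_cost (rep_block l) n <= list_cost l.
Proof.
  unfold rep_cost. induction n as [|[|n] IH]; simpl in *.
  - apply list_cost_ge0.
  - lra.
  - change (list_cost nil) with 0. lra.
Qed.

Lemma rep_cost_tail w N n : rep_cost (rep_tail N w) n = rep_cost w (max n N) - rep_cost w N.
Proof.
  unfold rep_cost. induction n; simpl rsum at 1.
  - replace (max 0 N) with N by lia. ring.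
  - rewrite IHn. unfold rep_tail. destruct (Nat.ltb_spec n N).
    + replace (max n N) with N by lia. replace (max (S n) N) with N by lia.
      change (list_cost nil) with 0. ring.
    + replace (max n N) with n by lia. replace (max (S n) N) with (S n) by lia.
      simpl rsum. ring.
Qed.

Lemma rep_cost_flatten w n : list_cost (rep_flatten w n) = rep_cost w n.
Proof. induction n; simpl; auto. now rewrite list_cost_app, IHn. Qed.

Lemma summable_le w w' :
  (forall k, list_cost (w' k) <= list_cost (w k)) -> summable w -> summable w'.
Proof. intros H [C HC]. exists C. intro n. eapply Rle_trans; [|apply HC]. now apply rsum_le. Qed.

Lemma summable_zero : summable rep_zero.
Proof. exists 0. intro n. rewrite rep_cost_zero. lra. Qed.

Lemma summable_add w w' : summable w -> summable w' -> summable (rep_add w w').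
Proof.
  intros [C HC] [C' HC']. exists (C + C'). intro n. rewrite rep_cost_add.
  specialize (HC n); specialize (HC' n). lra.
Qed.

Lemma summable_opp w : summable w -> summable (rep_opp w).
Proof. apply summable_le. intro. unfold rep_opp. rewrite list_cost_opp. lra. Qed.

Lemma summable_sub w w' : summable w -> summable w' -> summable (rep_sub w w').
Proof. intros. apply summable_add, summable_opp; auto. Qed.

Lemma summable_scal a w : summable w -> summable (rep_scal a w).
Proof.
  intros [C HC]. exists (Cmod a * C). intro n. rewrite rep_cost_scal.
  apply Rmult_le_compat_l; auto using Cmod_ge0.
Qed.

Lemma summable_block l : summable (rep_block l).
Proof. exists (list_cost l). apply rep_cost_block. Qed.

Lemma summable_trunc n w : summable w -> summable (rep_trunc n w).
Proof.
  apply summable_le. intro k. unfold rep_trunc.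
  destruct (Nat.ltb k n); [lra|apply list_cost_ge0].
Qed.

Lemma summable_tail n w : summable w -> summable (rep_tail n w).
Proof.
  apply summable_le. intro k. unfold rep_tail.
  destruct (Nat.ltb k n); [apply list_cost_ge0|lra].
Qed.

Section RepSums.
Context {E : BanachSpace} (T : X -> Y -> E).

Lemma has_sum_rep_add w w' l l' : has_sum (rep_terms T w) l -> has_sum (rep_terms T w') l' ->
  has_sum (rep_terms T (rep_add w w')) (bs_add l l').
Proof.
  intros H1 H2. eapply has_sum_ext; [|apply (has_sumD _ _ _ _ H1 H2)].
  intro k. symmetry. apply list_eval_app.
Qed.

Lemma has_sum_rep_block l : has_sum (rep_terms T (rep_block l)) (list_eval T l).
Proof.
  replace (list_eval T l) with (psum (rep_terms T (rep_block l)) 1) by apply add0l.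
  apply has_sum_stable. intros [|k] Hk; [lia|reflexivity].
Qed.

Lemma has_sum_rep_trunc n w : has_sum (rep_terms T (rep_trunc n w)) (psum (rep_terms T w) n).
Proof.
  replace (psum (rep_terms T w) n) with (psum (rep_terms T (rep_trunc n w)) n).
  - apply has_sum_stable. intros k Hk. unfold rep_terms, rep_trunc.
    now replace (Nat.ltb k n) with false by (symmetry; apply Nat.ltb_ge; auto).
  - apply psum_eq_lt. intros k Hk. unfold rep_terms, rep_trunc.
    now replace (Nat.ltb k n) with true by (symmetry; apply Nat.ltb_lt; auto).
Qed.

Lemma list_eval_flatten w n : list_eval T (rep_flatten w n) = psum (rep_terms T w) n.
Proof. induction n; simpl; auto. now rewrite list_eval_app, IHn. Qed.

Hypothesis T_bilinear : is_bilinear T.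

Lemma has_sum_rep_opp w l :
  has_sum (rep_terms T w) l -> has_sum (rep_terms T (rep_opp w)) (bs_opp l).
Proof.
  intro H. rewrite opp_scalN1.
  apply has_sum_ext with (fun k => bs_scal (Copp Cone) (rep_terms T w k)).
  - intro k. unfold rep_terms, rep_opp. now rewrite list_eval_opp, opp_scalN1.
  - apply (has_sum_lin (fun v : E => bs_scal (Copp Cone) v)); auto.
    split; [split|]; intros.
    + apply bs_scalDr.
    + now rewrite <- !bs_scalA, Cmul_comm.
    + exists 1. intro. rewrite bs_normZ, CmodN1. lra.
Qed.

Lemma has_sum_rep_scal a w l :
  has_sum (rep_terms T w) l -> has_sum (rep_terms T (rep_scal a w)) (bs_scal a l).
Proof.
  intro H. apply has_sum_ext with (fun k => bs_scal a (rep_terms T w k)).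
  - intro k. unfold rep_terms, rep_scal. now rewrite list_eval_scal.
  - apply (has_sum_lin (fun v : E => bs_scal a v)); auto.
    split; [split|]; intros.
    + apply bs_scalDr.
    + now rewrite <- !bs_scalA, Cmul_comm.
    + exists (Cmod a). intro. now rewrite bs_normZ; right.
Qed.

Lemma has_sum_rep_sub w w' l l' : has_sum (rep_terms T w) l -> has_sum (rep_terms T w') l' ->
  has_sum (rep_terms T (rep_sub w w')) (bs_sub l l').
Proof. intros. now apply has_sum_rep_add, has_sum_rep_opp. Qed.

End RepSums.


Lemma rep_equiv_refl w : rep_equiv w w.
Proof. intros E T M HT l l' H1 H2. eapply has_sum_unique; eauto. Qed.

Lemma rep_equiv_sym w w' : rep_equiv w w' -> rep_equiv w' w.
Proof. intros H E T M HT l l' H1 H2. symmetry. eapply H; eauto. Qed.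

Lemma rep_equiv_trans w1 w2 w3 :
  summable w2 -> rep_equiv w1 w2 -> rep_equiv w2 w3 -> rep_equiv w1 w3.
Proof.
  intros Hs H12 H23 E T M HT l l' H1 H3. destruct (rep_sum_exists T M w2 Hs HT) as [l2 H2].
  transitivity l2; [eapply H12|eapply H23]; eauto.
Qed.

Lemma has_sum_rep_equiv {E : BanachSpace} w w' (T : X -> Y -> E) M l :
  rep_equiv w w' -> summable w' -> bounded_bilinear T M ->
  has_sum (rep_terms T w) l -> has_sum (rep_terms T w') l.
Proof.
  intros HR Hs HT Hl. destruct (rep_sum_exists T M w' Hs HT) as [l' Hl'].
  now replace l with l' by (symmetry; eapply HR; eauto).
Qed.

Definition rep_class (w : rep) : rep -> Prop := fun w' => summable w' /\ rep_equiv w w'.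

Definition tensor_car : Type :=
  {S : rep -> Prop | exists w, summable w /\ S = rep_class w}.

(** Non-summable representations are sent to the class of [rep_zero]. *)
Definition tclass (w : rep) : tensor_car :=
  match excluded_middle_informative (summable w) with
  | left H => exist _ (rep_class w) (ex_intro _ w (conj H eq_refl))
  | right _ => exist _ (rep_class rep_zero) (ex_intro _ rep_zero (conj summable_zero eq_refl))
  end.

Lemma tclass_val w : summable w -> proj1_sig (tclass w) = rep_class w.
Proof. intro H. unfold tclass. now destruct (excluded_middle_informative (summable w)). Qed.

Lemma tensor_car_eq (S S' : tensor_car) : proj1_sig S = proj1_sig S' -> S = S'.
Proof.
  destruct S as [S HS], S' as [S' HS']; simpl. intros ->. f_equal. apply proof_irrelevance.
Qed.

Lemma tclass_equiv w w' : summable w -> summable w' -> rep_equiv w w' -> tclass w = tclass w'.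
Proof.
  intros H1 H2 HR. apply tensor_car_eq. rewrite !tclass_val by auto.
  apply functional_extensionality. intro v. apply propositional_extensionality.
  split; intros [Hv HRv]; split; auto.
  - exact (rep_equiv_trans w' w v H1 (rep_equiv_sym _ _ HR) HRv).
  - exact (rep_equiv_trans w w' v H2 HR HRv).
Qed.

Lemma rep_equiv_tclass w w' : summable w -> summable w' -> tclass w = tclass w' -> rep_equiv w w'.
Proof.
  intros H1 H2 E. assert (Hw' : proj1_sig (tclass w) w').
  { rewrite E, tclass_val by auto. split; auto. apply rep_equiv_refl. }
  rewrite tclass_val in Hw' by auto. apply Hw'.
Qed.

Lemma tclass_surj (S : tensor_car) : exists w, summable w /\ S = tclass w.
Proof.
  destruct S as [S [w [Hw HS]]]. exists w. split; auto.
  apply tensor_car_eq. simpl. now rewrite tclass_val.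
Qed.

Definition trep (S : tensor_car) : rep :=
  proj1_sig (constructive_indefinite_description _ (tclass_surj S)).

Lemma trep_spec (S : tensor_car) : summable (trep S) /\ S = tclass (trep S).
Proof. unfold trep. now destruct (constructive_indefinite_description _ (tclass_surj S)). Qed.

Lemma trep_summable (S : tensor_car) : summable (trep S).
Proof. apply trep_spec. Qed.

Lemma tensor_car_val (S : tensor_car) : proj1_sig S = rep_class (trep S).
Proof. destruct (trep_spec S) as [H1 H2]. rewrite H2 at 1. now apply tclass_val. Qed.

Lemma has_sum_trep {E : BanachSpace} w (T : X -> Y -> E) M l :
  summable w -> bounded_bilinear T M ->
  has_sum (rep_terms T w) l -> has_sum (rep_terms T (trep (tclass w))) l.
Proof.
  intros Hs HT Hl. destruct (trep_spec (tclass w)) as [Htr Heq].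
  eapply has_sum_rep_equiv; eauto. apply rep_equiv_tclass; auto.
Qed.

Lemma tclass_eq_sums w w' : summable w -> summable w' ->
  (forall (E : BanachSpace) (T : X -> Y -> E) M l, bounded_bilinear T M ->
     has_sum (rep_terms T w) l -> has_sum (rep_terms T w') l) ->
  tclass w = tclass w'.
Proof.
  intros H1 H2 H. apply tclass_equiv; auto. intros E T M HT l l' Hl Hl'.
  eapply has_sum_unique; [eapply H|]; eauto.
Qed.

Lemma tclass_eq_terms w w' : summable w -> summable w' ->
  (forall (E : BanachSpace) (T : X -> Y -> E) M, bounded_bilinear T M ->
     forall k, rep_terms T w k = rep_terms T w' k) ->
  tclass w = tclass w'.
Proof.
  intros H1 H2 H. apply tclass_eq_sums; auto. intros E T M l HT Hl.
  eapply has_sum_ext; [|exact Hl]. eauto.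
Qed.

Ltac tensor_rep S :=
  let w := fresh "w" in let Hw := fresh "Hw" in destruct (tclass_surj S) as [w [Hw ->]].


Definition tzero : tensor_car := tclass rep_zero.
Definition tadd (S S' : tensor_car) : tensor_car := tclass (rep_add (trep S) (trep S')).
Definition topp (S : tensor_car) : tensor_car := tclass (rep_opp (trep S)).
Definition tscal a (S : tensor_car) : tensor_car := tclass (rep_scal a (trep S)).
Definition tsub (S S' : tensor_car) : tensor_car := tadd S (topp S').

Lemma rep_equiv_trep w : summable w -> rep_equiv w (trep (tclass w)).
Proof. intro Hs. apply rep_equiv_tclass; auto using trep_summable. apply trep_spec. Qed.

Lemma rep_equiv_add v v' w w' : summable v -> summable v' -> summable w -> summable w' ->
  rep_equiv v v' -> rep_equiv w w' -> rep_equiv (rep_add v w) (rep_add v' w').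
Proof.
  intros Hv Hv' Hw Hw' Ev Ew E T M HT l l' Hl Hl'.
  destruct (rep_sum_exists T M v Hv HT) as [l1 H1].
  destruct (rep_sum_exists T M w Hw HT) as [l2 H2].
  rewrite (has_sum_unique _ _ _ Hl (has_sum_rep_add T _ _ _ _ H1 H2)).
  eapply has_sum_unique; [|exact Hl'].
  apply has_sum_rep_add; eapply has_sum_rep_equiv; eauto.
Qed.

Lemma rep_equiv_opp w w' : summable w -> summable w' ->
  rep_equiv w w' -> rep_equiv (rep_opp w) (rep_opp w').
Proof.
  intros Hw Hw' Ew E T M HT l l' Hl Hl'.
  destruct (rep_sum_exists T M w Hw HT) as [l1 H1].
  rewrite (has_sum_unique _ _ _ Hl (has_sum_rep_opp T (proj1 HT) _ _ H1)).
  eapply has_sum_unique; [|exact Hl'].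
  apply has_sum_rep_opp; [apply HT|]. eapply has_sum_rep_equiv; eauto.
Qed.

Lemma rep_equiv_scal a w w' : summable w -> summable w' ->
  rep_equiv w w' -> rep_equiv (rep_scal a w) (rep_scal a w').
Proof.
  intros Hw Hw' Ew E T M HT l l' Hl Hl'.
  destruct (rep_sum_exists T M w Hw HT) as [l1 H1].
  rewrite (has_sum_unique _ _ _ Hl (has_sum_rep_scal T (proj1 HT) a _ _ H1)).
  eapply has_sum_unique; [|exact Hl'].
  apply has_sum_rep_scal; [apply HT|]. eapply has_sum_rep_equiv; eauto.
Qed.

Lemma tadd_tclass w w' : summable w -> summable w' ->
  tadd (tclass w) (tclass w') = tclass (rep_add w w').
Proof.
  intros Hw Hw'. apply tclass_equiv; auto using summable_add, trep_summable.
  apply rep_equiv_add; auto using trep_summable; apply rep_equiv_sym, rep_equiv_trep; auto.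
Qed.

Lemma topp_tclass w : summable w -> topp (tclass w) = tclass (rep_opp w).
Proof.
  intro Hw. apply tclass_equiv; auto using summable_opp, trep_summable.
  apply rep_equiv_opp; auto using trep_summable. apply rep_equiv_sym, rep_equiv_trep; auto.
Qed.

Lemma tscal_tclass a w : summable w -> tscal a (tclass w) = tclass (rep_scal a w).
Proof.
  intro Hw. apply tclass_equiv; auto using summable_scal, trep_summable.
  apply rep_equiv_scal; auto using trep_summable. apply rep_equiv_sym, rep_equiv_trep; auto.
Qed.

Lemma tsub_tclass w w' : summable w -> summable w' ->
  tsub (tclass w) (tclass w') = tclass (rep_sub w w').
Proof. intros. unfold tsub. now rewrite topp_tclass, tadd_tclass by auto using summable_opp. Qed.

(** The infimum of the costs of the representations of [S]. *)

Definition tcost (S : tensor_car) (c : R) : Prop :=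
  exists w, proj1_sig S w /\ forall n, rep_cost w n <= c.

Definition tnorm (S : tensor_car) : R :=
  - epsilon (inhabits 0) (fun m => is_lub (fun x => tcost S (- x)) m).

Lemma tcost_ge0 S c : tcost S c -> 0 <= c.
Proof. intros [w [_ H]]. apply (H O). Qed.

Lemma tnorm_lub S : is_lub (fun x => tcost S (- x)) (- tnorm S).
Proof.
  unfold tnorm. rewrite Ropp_involutive. apply epsilon_spec.
  destruct (completeness (fun x => tcost S (- x))) as [m Hm]; [| |now exists m].
  - exists 0. intros x Hx. apply tcost_ge0 in Hx. lra.
  - destruct (trep_summable S) as [C HC]. exists (- C). rewrite Ropp_involutive.
    exists (trep S). split; auto. rewrite tensor_car_val.
    split; [apply trep_summable|apply rep_equiv_refl].
Qed.

Lemma tnorm_le S c : tcost S c -> tnorm S <= c.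
Proof.
  intro H. apply Ropp_le_cancel, (proj1 (tnorm_lub S)). now rewrite Ropp_involutive.
Qed.

Lemma tnorm_ge S b : (forall c, tcost S c -> b <= c) -> b <= tnorm S.
Proof.
  intro H. apply Ropp_le_cancel, (proj2 (tnorm_lub S)).
  intros x Hx. specialize (H _ Hx). lra.
Qed.

Lemma tnorm_ge0 S : 0 <= tnorm S.
Proof. apply tnorm_ge, tcost_ge0. Qed.

Lemma tnorm_tclass_le w c : summable w -> (forall n, rep_cost w n <= c) -> tnorm (tclass w) <= c.
Proof.
  intros Hs Hc. apply tnorm_le. exists w. split; auto.
  rewrite tclass_val by auto. split; auto. apply rep_equiv_refl.
Qed.

Lemma tnorm_approx S eps : 0 < eps ->
  exists w, summable w /\ tclass w = S /\ forall n, rep_cost w n <= tnorm S + eps.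
Proof.
  intro He.
  destruct (classic (exists c, tcost S c /\ c < tnorm S + eps)) as [[c [[w [Hw Hc]] Hlt]]|H].
  - rewrite tensor_car_val in Hw. destruct Hw as [Hs HR]. exists w. split; auto. split.
    + destruct (trep_spec S) as [Htr ->]. apply tclass_equiv; auto.
      now apply rep_equiv_sym.
    + intro n. specialize (Hc n). lra.
  - exfalso. assert (tnorm S + eps <= tnorm S); [|lra].
    apply tnorm_ge. intros c Hc. apply Rnot_lt_le. intro Hlt. apply H. now exists c.
Qed.

Lemma tnorm_scal_le a S : tnorm (tscal a S) <= Cmod a * tnorm S.
Proof.
  apply le_epsilon_R. intros eps He. pose proof (Cmod_ge0 a).
  destruct (tnorm_approx S (eps / (Cmod a + 1))) as [w [Hs [<- Hc]]];
    [apply Rdiv_lt_0_compat; lra|].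
  rewrite tscal_tclass by auto.
  eapply Rle_trans; [apply tnorm_tclass_le; [now apply summable_scal|]|].
  - intro n. rewrite rep_cost_scal. apply Rmult_le_compat_l; [lra|apply Hc].
  - pose proof (Rmult_div_succ_le (Cmod a) eps). lra.
Qed.


Lemma tensor_addA S1 S2 S3 : tadd S1 (tadd S2 S3) = tadd (tadd S1 S2) S3.
Proof.
  tensor_rep S1; tensor_rep S2; tensor_rep S3.
  rewrite !tadd_tclass by auto using summable_add.
  f_equal. apply functional_extensionality; intro k. apply app_assoc.
Qed.

Lemma tensor_addC S1 S2 : tadd S1 S2 = tadd S2 S1.
Proof.
  tensor_rep S1; tensor_rep S2. rewrite !tadd_tclass by auto.
  apply tclass_eq_terms; auto using summable_add. intros E T M HT k.
  unfold rep_terms, rep_add. rewrite !list_eval_app. apply bs_addC.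
Qed.

Lemma tensor_add0 S : tadd S tzero = S.
Proof.
  tensor_rep S. unfold tzero. rewrite tadd_tclass by auto using summable_zero.
  f_equal. apply functional_extensionality; intro k. apply app_nil_r.
Qed.

Lemma tensor_addN S : tadd S (topp S) = tzero.
Proof.
  tensor_rep S. unfold tzero. rewrite topp_tclass, tadd_tclass by auto using summable_opp.
  apply tclass_eq_terms; auto using summable_add, summable_opp, summable_zero.
  intros E T M HT k. unfold rep_terms, rep_add, rep_opp.
  now rewrite list_eval_app, list_eval_opp, bs_addN by apply HT.
Qed.

Lemma tensor_scalA a b S : tscal (Cmul a b) S = tscal a (tscal b S).
Proof.
  tensor_rep S. rewrite !tscal_tclass by auto using summable_scal.
  f_equal. apply functional_extensionality; intro k. unfold rep_scal, list_scal.
  rewrite map_map. apply map_ext. intro. now rewrite bs_scalA.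
Qed.

Lemma tensor_scal1 S : tscal Cone S = S.
Proof.
  tensor_rep S. rewrite tscal_tclass by auto.
  f_equal. apply functional_extensionality; intro k. unfold rep_scal, list_scal.
  rewrite <- (map_id (w k)) at 2. apply map_ext. intros [x y]. now rewrite bs_scal1.
Qed.

Lemma tensor_scalDr a S1 S2 : tscal a (tadd S1 S2) = tadd (tscal a S1) (tscal a S2).
Proof.
  tensor_rep S1; tensor_rep S2.
  rewrite tadd_tclass, !tscal_tclass, tadd_tclass by auto using summable_add, summable_scal.
  f_equal. apply functional_extensionality; intro k. apply map_app.
Qed.

Lemma tensor_scalDl a b S : tscal (Cadd a b) S = tadd (tscal a S) (tscal b S).
Proof.
  tensor_rep S. rewrite !tscal_tclass, tadd_tclass by auto using summable_scal.
  apply tclass_eq_terms; auto using summable_add, summable_scal.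
  intros E T M HT k. unfold rep_terms, rep_scal, rep_add.
  rewrite list_eval_app, !list_eval_scal by apply HT. apply bs_scalDl.
Qed.

Lemma tensor_norm_eq0 S : tnorm S = 0 -> S = tzero.
Proof.
  intro H0. tensor_rep S. unfold tzero.
  apply tclass_eq_sums; auto using summable_zero. intros E T M l HT Hl.
  replace l with (bs_zero : E).
  { change (has_sum (rep_terms T rep_zero) (psum (rep_terms T rep_zero) 0)).
    now apply has_sum_stable. }
  symmetry. apply norm_le_eps_eq0. intros eps He. pose proof (Rabs_pos M).
  destruct (tnorm_approx (tclass w) (eps / (Rabs M + 1))) as [w' [Hs' [Heq Hc]]];
    [apply Rdiv_lt_0_compat; lra|].
  rewrite H0, Rplus_0_l in Hc.
  pose proof (has_sum_rep_equiv w w' T M l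
                (rep_equiv_tclass _ _ Hw Hs' (eq_sym Heq)) Hs' HT Hl) as Hl'.
  pose proof (rep_sum_norm T M w' l _ HT Hl' Hc).
  pose proof (Rmult_div_succ_le (Rabs M) eps). lra.
Qed.

Lemma tensor_normZ a S : tnorm (tscal a S) = Cmod a * tnorm S.
Proof.
  apply Rle_antisym; [apply tnorm_scal_le|].
  destruct (classic (a = Czero)) as [->|Ha].
  - rewrite Cmod0, Rmult_0_l. apply tnorm_ge0.
  - pose proof (tnorm_scal_le (Cinv a) (tscal a S)) as H.
    rewrite <- tensor_scalA, Cinv_l, tensor_scal1 in H by auto.
    pose proof (Cmod_inv a Ha). pose proof (Cmod_ge0 a).
    apply (Rmult_le_compat_l (Cmod a)) in H; auto.
    replace (Cmod a * (Cmod (Cinv a) * tnorm (tscal a S))) with (tnorm (tscal a S)) in H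
      by (rewrite <- Rmult_assoc, (Rmult_comm (Cmod a)), H0; ring).
    exact H.
Qed.

Lemma tensor_normD S1 S2 : tnorm (tadd S1 S2) <= tnorm S1 + tnorm S2.
Proof.
  apply le_epsilon_R. intros eps He.
  destruct (tnorm_approx S1 (eps / 2)) as [w1 [Hs1 [<- Hc1]]]; [lra|].
  destruct (tnorm_approx S2 (eps / 2)) as [w2 [Hs2 [<- Hc2]]]; [lra|].
  rewrite tadd_tclass by auto. apply tnorm_tclass_le; [now apply summable_add|].
  intro n. rewrite rep_cost_add. specialize (Hc1 n); specialize (Hc2 n). lra.
Qed.


Lemma tsub_chain S1 S2 S3 : tsub S1 S3 = tadd (tsub S1 S2) (tsub S2 S3).
Proof.
  tensor_rep S1; tensor_rep S2; tensor_rep S3.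
  rewrite !tsub_tclass, tadd_tclass by auto using summable_sub.
  apply tclass_eq_sums; auto using summable_sub, summable_add.
  intros E T M l HT Hl.
  destruct (rep_sum_exists T M w Hw HT) as [l1 H1].
  destruct (rep_sum_exists T M w0 Hw0 HT) as [l2 H2].
  destruct (rep_sum_exists T M w1 Hw1 HT) as [l3 H3].
  rewrite (has_sum_unique _ _ _ Hl (has_sum_rep_sub T (proj1 HT) _ _ _ _ H1 H3)).
  rewrite (subr_chain l1 l2 l3). apply has_sum_rep_add; apply has_sum_rep_sub; auto; apply HT.
Qed.

Lemma tnorm_sub_triangle S1 S2 S3 :
  tnorm (tsub S1 S3) <= tnorm (tsub S1 S2) + tnorm (tsub S2 S3).
Proof. rewrite (tsub_chain S1 S2 S3). apply tensor_normD. Qed.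

Lemma tnorm_subC S1 S2 : tnorm (tsub S1 S2) = tnorm (tsub S2 S1).
Proof.
  assert (E : tsub S2 S1 = tscal (Copp Cone) (tsub S1 S2)).
  { tensor_rep S1; tensor_rep S2. rewrite !tsub_tclass, tscal_tclass by auto using summable_sub.
    apply tclass_eq_sums; auto using summable_sub, summable_scal.
    intros E T M l HT Hl.
    destruct (rep_sum_exists T M w Hw HT) as [l1 H1].
    destruct (rep_sum_exists T M w0 Hw0 HT) as [l2 H2].
    rewrite (has_sum_unique _ _ _ Hl (has_sum_rep_sub T (proj1 HT) _ _ _ _ H2 H1)).
    rewrite opp_subr, opp_scalN1.
    apply has_sum_rep_scal, has_sum_rep_sub; auto; apply HT. }
  rewrite E, tensor_normZ, CmodN1. ring.
Qed.

Lemma tsub_tadd S1 S2 S3 : tsub (tsub S1 S2) S3 = tsub S1 (tadd S2 S3).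
Proof.
  tensor_rep S1; tensor_rep S2; tensor_rep S3.
  rewrite tadd_tclass, !tsub_tclass by auto using summable_sub, summable_add.
  apply tclass_eq_sums; auto using summable_sub, summable_add.
  intros E T M l HT Hl.
  destruct (rep_sum_exists T M w Hw HT) as [l1 H1].
  destruct (rep_sum_exists T M w0 Hw0 HT) as [l2 H2].
  destruct (rep_sum_exists T M w1 Hw1 HT) as [l3 H3].
  rewrite (has_sum_unique _ _ _ Hl (has_sum_rep_sub T (proj1 HT) _ _ _ _
             (has_sum_rep_sub T (proj1 HT) _ _ _ _ H1 H2) H3)).
  replace (bs_sub (bs_sub l1 l2) l3) with (bs_sub l1 (bs_add l2 l3))
    by (unfold bs_sub; now rewrite oppD, bs_addA).
  apply has_sum_rep_sub; [apply HT|auto|]. now apply has_sum_rep_add.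
Qed.

Lemma tsub_trunc n w :
  summable w -> tsub (tclass w) (tclass (rep_trunc n w)) = tclass (rep_tail n w).
Proof.
  intro Hs. rewrite tsub_tclass by auto using summable_trunc.
  apply tclass_eq_sums; auto using summable_sub, summable_trunc, summable_tail.
  intros E T M l HT Hl.
  destruct (rep_sum_exists T M _ (summable_trunc n w Hs) HT) as [l1 H1].
  destruct (rep_sum_exists T M _ (summable_tail n w Hs) HT) as [l2 H2].
  assert (Hw : has_sum (rep_terms T w) (bs_add l1 l2)).
  { replace w with (rep_add (rep_trunc n w) (rep_tail n w)) by
      (apply functional_extensionality; intro k; unfold rep_add, rep_trunc, rep_tail;
       destruct (Nat.ltb k n); simpl; auto using app_nil_r).
    now apply has_sum_rep_add. }
  rewrite (has_sum_unique _ _ _ Hl (has_sum_rep_sub T (proj1 HT) _ _ _ _ Hw H1)).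
  replace (bs_sub (bs_add l1 l2) l1) with l2; auto.
  unfold bs_sub. now rewrite (bs_addC l1), <- bs_addA, bs_addN, bs_add0.
Qed.

Lemma tclass_trunc_block w n :
  summable w -> tclass (rep_block (rep_flatten w n)) = tclass (rep_trunc n w).
Proof.
  intro Hs. apply tclass_eq_sums; auto using summable_block, summable_trunc.
  intros E T M l HT Hl. rewrite (has_sum_unique _ _ _ Hl (has_sum_rep_block T _)).
  rewrite list_eval_flatten. apply has_sum_rep_trunc.
Qed.

Lemma tclass_trunc_S w n : summable w ->
  tclass (rep_trunc (S n) w) = tadd (tclass (rep_trunc n w)) (tclass (rep_block (w n))).
Proof.
  intro Hs. rewrite tadd_tclass by auto using summable_trunc, summable_block.
  apply tclass_eq_sums; auto using summable_trunc, summable_add, summable_block.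
  intros E T M l HT Hl. rewrite (has_sum_unique _ _ _ Hl (has_sum_rep_trunc T _ _)).
  apply has_sum_rep_add; [apply has_sum_rep_trunc|apply has_sum_rep_block].
Qed.

Lemma tnorm_approx_block S eps : 0 < eps ->
  exists l, list_cost l <= tnorm S + eps /\ tnorm (tsub S (tclass (rep_block l))) <= eps.
Proof.
  intro He. destruct (tnorm_approx S (eps / 2)) as [w [Hs [<- Hc]]]; [lra|].
  destruct (rsum_cauchy_tail (fun k => list_cost (w k)) _
              (fun k => list_cost_ge0 _) Hc (eps / 2)) as [N HN]; [lra|].
  exists (rep_flatten w N). split.
  - rewrite rep_cost_flatten. specialize (Hc N). lra.
  - rewrite tclass_trunc_block, tsub_trunc by auto.
    apply tnorm_tclass_le; [now apply summable_tail|].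
    intro n. rewrite rep_cost_tail. specialize (HN N (max n N) (le_n _) ltac:(lia)).
    unfold rep_cost. lra.
Qed.

Lemma rep_cost_tail_geometric w N c : 0 <= c ->
  (forall k, (N <= k)%nat -> list_cost (w k) <= c * half_pow k) ->
  forall n, rep_cost (rep_tail N w) n <= 2 * c * half_pow N.
Proof.
  intros Hc H n. unfold rep_cost. eapply Rle_trans.
  - apply rsum_le with (b := fun k => c * (if Nat.ltb k N then 0 else half_pow k)).
    intro k. unfold rep_tail. destruct (Nat.ltb_spec k N); simpl; [lra|]. apply H; lia.
  - rewrite rsumZ. pose proof (rsum_half_pow_tail N n).
    pose proof (Rmult_le_compat_l c _ _ Hc H0). lra.
Qed.

Lemma summable_geometric w c : 0 <= c ->
  (forall k, list_cost (w (S k)) <= c * half_pow (S k)) -> summable w.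
Proof.
  intros Hc H. exists (list_cost (w O) + 2 * c * half_pow 1). intro n.
  apply Rle_trans with (rep_cost w (max n 1)); [apply rep_cost_mono; lia|].
  pose proof (rep_cost_tail w 1 n).
  pose proof (rep_cost_tail_geometric w 1 c Hc ltac:(intros [|k] Hk; [lia|apply H]) n).
  unfold rep_cost in *. simpl in *. lra.
Qed.

Fixpoint greedy_partial (F : nat -> tensor_car -> list (X * Y)) (K : nat) : tensor_car :=
  match K with
  | O => tzero
  | S K => tadd (greedy_partial F K) (tclass (rep_block (F K (greedy_partial F K))))
  end.

(** A Cauchy sequence [u] is approached greedily: block [K] approximates
    [u (N K)] minus the sum of the previous blocks to within [(1/2)^K], so the
    blocks form a summable representation whose class is the limit. *)
Lemma tensor_complete (u : nat -> tensor_car) :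
  (forall eps, 0 < eps -> exists N, forall n m, (N <= n)%nat -> (N <= m)%nat ->
     tnorm (tsub (u n) (u m)) < eps) ->
  exists l, forall eps, 0 < eps -> exists N, forall n, (N <= n)%nat ->
     tnorm (tsub (u n) l) < eps.
Proof.
  intro Hc.
  destruct (cauchy_modulus (fun n m => tnorm (tsub (u n) (u m))) Hc) as [N [HNmono HN]].
  pose (F := fun K a => proj1_sig (constructive_indefinite_description _
               (tnorm_approx_block (tsub (u (N K)) a) (half_pow K) (half_pow_pos K)))).
  assert (HF : forall K a, list_cost (F K a) <= tnorm (tsub (u (N K)) a) + half_pow K /\
                 tnorm (tsub (tsub (u (N K)) a) (tclass (rep_block (F K a)))) <= half_pow K).
  { intros K a. unfold F. now destruct (constructive_indefinite_description _ _). }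
  pose (W := fun k => F k (greedy_partial F k)).
  assert (Hclose : forall K, tnorm (tsub (u (N K)) (greedy_partial F (S K))) <= half_pow K).
  { intro K. simpl. rewrite <- tsub_tadd. apply HF. }
  assert (Hblock : forall K, list_cost (W (S K)) <= 5 * half_pow (S K)).
  { intro K. destruct (HF (S K) (greedy_partial F (S K))) as [H1 _].
    pose proof (tnorm_sub_triangle (u (N (S K))) (u (N K)) (greedy_partial F (S K))).
    pose proof (HN K (N (S K)) (N K) (HNmono K) (le_n _)).
    pose proof (Hclose K). rewrite half_pow_S in *. unfold W. lra. }
  assert (Htail : forall K n, rep_cost (rep_tail (S K) W) n <= 5 * half_pow K).
  { intros K n. eapply Rle_trans; [apply (rep_cost_tail_geometric W (S K) 5)|].
    - lra.
    - intros [|k] Hk; [lia|apply Hblock].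
    - rewrite half_pow_S. lra. }
  assert (HWs : summable W) by (apply (summable_geometric W 5); [lra|apply Hblock]).
  assert (Hpartial : forall K, tclass (rep_trunc K W) = greedy_partial F K).
  { induction K; [reflexivity|]. now rewrite tclass_trunc_S, IHK. }
  exists (tclass W). intros eps He.
  destruct (pow_lt_1_zero (/2) ltac:(rewrite Rabs_right; lra) (eps / 8) ltac:(lra)) as [K HK].
  specialize (HK K (le_n _)). rewrite Rabs_right in HK by (apply Rle_ge, pow_le; lra).
  exists (N K). intros n Hn.
  assert (Hlim : tnorm (tsub (greedy_partial F (S K)) (tclass W)) <= 5 * half_pow K).
  { rewrite tnorm_subC, <- Hpartial, tsub_trunc by auto.
    apply tnorm_tclass_le; auto using summable_tail. }
  pose proof (tnorm_sub_triangle (u n) (u (N K)) (tclass W)).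
  pose proof (tnorm_sub_triangle (u (N K)) (greedy_partial F (S K)) (tclass W)).
  pose proof (HN K n (N K) Hn (le_n _)). pose proof (Hclose K).
  unfold half_pow in *. lra.
Qed.

Definition proj_tensor_space : BanachSpace :=
  @mkBS tensor_car tzero tadd topp tscal tnorm tensor_addA tensor_addC tensor_add0
    tensor_addN tensor_scalA tensor_scal1 tensor_scalDr tensor_scalDl tensor_norm_eq0
    tensor_normZ tensor_normD tensor_complete.

Definition elem_tensor (x : X) (y : Y) : proj_tensor_space := tclass (rep_block ((x, y) :: nil)).

Lemma elem_tensor_bilinear : is_bilinear elem_tensor.
Proof.
  unfold elem_tensor. split; [|split; [|split]]; simpl; intros.
  - rewrite tadd_tclass by apply summable_block.
    apply tclass_eq_terms; auto using summable_block, summable_add.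
    intros E T M [HT _] [|k]; [|reflexivity]. unfold rep_terms, rep_add, list_eval; simpl.
    rewrite !bs_add0. apply HT.
  - rewrite tscal_tclass by apply summable_block. f_equal.
    apply functional_extensionality. now intros [|k].
  - rewrite tadd_tclass by apply summable_block.
    apply tclass_eq_terms; auto using summable_block, summable_add.
    intros E T M [HT _] [|k]; [|reflexivity]. unfold rep_terms, rep_add, list_eval; simpl.
    rewrite !bs_add0. apply HT.
  - rewrite tscal_tclass by apply summable_block.
    apply tclass_eq_terms; auto using summable_block, summable_scal.
    intros E T M [HT _] [|k]; [|reflexivity]. unfold rep_terms, rep_scal, list_eval; simpl.
    rewrite !bs_add0. destruct HT as [_ [H2 [_ H4]]]. now rewrite H2, H4.
Qed.

Lemma elem_tensor_norm x y : bs_norm (elem_tensor x y) <= bs_norm x * bs_norm y.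
Proof.
  apply tnorm_tclass_le; [apply summable_block|]. intro n.
  eapply Rle_trans; [apply rep_cost_block|]. simpl. lra.
Qed.

Definition tlift {E : BanachSpace} (T : X -> Y -> E) (S : proj_tensor_space) : E :=
  epsilon (inhabits bs_zero) (fun l => has_sum (rep_terms T (trep S)) l).

Section Lift.
Context {E : BanachSpace} (T : X -> Y -> E) (M : R).
Hypothesis HT : bounded_bilinear T M.

Lemma tlift_tclass w l : summable w -> has_sum (rep_terms T w) l -> tlift T (tclass w) = l.
Proof.
  intros Hs Hl. eapply has_sum_unique; [|apply (has_sum_trep w T M l Hs HT Hl)].
  unfold tlift. apply epsilon_spec. exists l. now apply (has_sum_trep w T M).
Qed.

Lemma tlift_linear : is_linear (tlift T).
Proof.
  split; simpl.
  - intros S1 S2. tensor_rep S1. tensor_rep S2. rewrite tadd_tclass by auto.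
    destruct (rep_sum_exists T M w Hw HT) as [l1 H1].
    destruct (rep_sum_exists T M w0 Hw0 HT) as [l2 H2].
    rewrite (tlift_tclass w l1), (tlift_tclass w0 l2) by auto.
    apply tlift_tclass; auto using summable_add, has_sum_rep_add.
  - intros a S. tensor_rep S. rewrite tscal_tclass by auto.
    destruct (rep_sum_exists T M w Hw HT) as [l1 H1].
    rewrite (tlift_tclass w l1) by auto.
    apply tlift_tclass; auto using summable_scal. apply has_sum_rep_scal; auto. apply HT.
Qed.

Lemma tlift_norm S : bs_norm (tlift T S) <= M * bs_norm S.
Proof.
  simpl. tensor_rep S. destruct (rep_sum_exists T M w Hw HT) as [l Hl].
  rewrite (tlift_tclass w l) by auto.
  destruct (Rle_dec 0 M) as [HM0|HM0].
  - apply le_epsilon_R. intros eps He.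
    destruct (tnorm_approx (tclass w) (eps / (M + 1))) as [w' [Hs' [Heq Hc]]];
      [apply Rdiv_lt_0_compat; lra|].
    pose proof (has_sum_rep_equiv w w' T M l
                  (rep_equiv_tclass _ _ Hw Hs' (eq_sym Heq)) Hs' HT Hl) as Hl'.
    pose proof (rep_sum_norm T M w' l _ HT Hl' Hc).
    rewrite Rabs_right, Rmult_plus_distr_l in H by lra.
    pose proof (Rmult_div_succ_le M eps). lra.
  - (* [M < 0] forces [||x|| ||y|| = 0] for all [x], [y]: every cost vanishes. *)
    assert (Hc : forall n, rep_cost w n <= 0).
    { intro n. unfold rep_cost. rewrite (rsum_ext _ (fun _ => 0)); [induction n; simpl; lra|].
      intro k. induction (w k) as [|[x y] l' IH]; simpl; auto. rewrite IH.
      pose proof (proj2 HT x y). pose proof (norm_ge0 (T x y)).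
      pose proof (Rmult_le_pos _ _ (norm_ge0 x) (norm_ge0 y)). nra. }
    pose proof (rep_sum_norm T M w l 0 HT Hl Hc). pose proof (tnorm_tclass_le w 0 Hw Hc).
    pose proof (tnorm_ge0 (tclass w)). pose proof (norm_ge0 l). nra.
Qed.

End Lift.

Lemma tclass_trunc_converges w : summable w ->
  forall eps, 0 < eps -> exists N, forall n, (N <= n)%nat ->
    tnorm (tsub (tclass w) (tclass (rep_trunc n w))) <= eps.
Proof.
  intros Hs eps He. pose proof Hs as [C HC].
  destruct (rsum_cauchy_tail (fun k => list_cost (w k)) C (fun k => list_cost_ge0 _) HC eps He)
    as [N HN].
  exists N. intros n Hn. rewrite tsub_trunc by auto.
  apply tnorm_tclass_le; [now apply summable_tail|]. intro m. rewrite rep_cost_tail.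
  specialize (HN n (max m n) Hn ltac:(lia)). unfold rep_cost. lra.
Qed.

Lemma tclass_block_cons p l :
  tclass (rep_block (p :: l)) = tadd (tclass (rep_block (p :: nil))) (tclass (rep_block l)).
Proof.
  rewrite tadd_tclass by apply summable_block. f_equal.
  apply functional_extensionality. now intros [|k].
Qed.

Lemma tlift_unique {E : BanachSpace} (T : X -> Y -> E) M (L : proj_tensor_space -> E) :
  bounded_bilinear T M -> bounded_linear L -> (forall x y, L (elem_tensor x y) = T x y) ->
  forall S, L S = tlift T S.
Proof.
  intros HT HL HLT S. tensor_rep S.
  assert (Hblock : forall l, L (tclass (rep_block l)) = list_eval T l).
  { induction l as [|[x y] l IH].
    - replace (tclass (rep_block nil)) with (tzero : proj_tensor_space)
        by (unfold tzero; f_equal; apply functional_extensionality; now intros [|k]).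
      exact (lin0 L (proj1 HL)).
    - rewrite tclass_block_cons.
      change (L (@bs_add proj_tensor_space (elem_tensor x y) (tclass (rep_block l)))
              = list_eval T ((x, y) :: l)).
      now rewrite (proj1 (proj1 HL)), IH, HLT. }
  assert (Htrunc : forall n, L (tclass (rep_trunc n w)) = psum (rep_terms T w) n).
  { induction n.
    - replace (rep_trunc 0 w) with rep_zero by (apply functional_extensionality; now intro).
      exact (lin0 L (proj1 HL)).
    - rewrite tclass_trunc_S by auto.
      change (L (@bs_add proj_tensor_space (tclass (rep_trunc n w)) (tclass (rep_block (w n))))
              = psum (rep_terms T w) (S n)).
      now rewrite (proj1 (proj1 HL)), IHn, Hblock. }
  destruct (rep_sum_exists T M w Hw HT) as [l Hl]. rewrite (tlift_tclass T M HT w l) by auto.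
  apply (has_sum_unique (rep_terms T w)); auto.
  destruct (bounded_linear_nonneg L HL) as [K [K0 HK]].
  intros eps He.
  destruct (tclass_trunc_converges w Hw (eps / 2 / (K + 1))) as [N HN];
    [apply Rdiv_lt_0_compat; lra|].
  exists N. intros n Hn. rewrite <- Htrunc, norm_subC, <- linB by apply HL.
  eapply Rle_lt_trans; [apply HK|]. specialize (HN n Hn).
  change (K * tnorm (tsub (tclass w) (tclass (rep_trunc n w))) < eps).
  pose proof (Rmult_le_compat_l K _ _ K0 HN).
  pose proof (Rmult_div_succ_le K (eps / 2) K0 ltac:(lra)). lra.
Qed.

Lemma proj_tensor_space_spec : is_proj_tensor X Y proj_tensor_space elem_tensor.
Proof.
  split; [apply elem_tensor_bilinear|split; [apply elem_tensor_norm|]].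
  intros E T M HT HM. assert (HTM : bounded_bilinear T M) by now split.
  exists (tlift T). split; [now apply (tlift_linear T M)|]. split; [apply (tlift_norm T M HTM)|].
  split.
  - intros x y. apply (tlift_tclass T M HTM); [apply summable_block|].
    rewrite <- (list_eval1 T x y). apply has_sum_rep_block.
  - intros L HL HLT. now apply (tlift_unique T M).
Qed.

End ProjectiveTensor.

Lemma proj_tensor_exists (X Y : BanachSpace) :
  exists (P : BanachSpace) (t : X -> Y -> P), is_proj_tensor X Y P t.
Proof. exists proj_tensor_space, elem_tensor. apply proj_tensor_space_spec. Qed.

Section UniversalProperty.
Context {X Y P : BanachSpace} (t : X -> Y -> P).
Hypothesis Ht : is_proj_tensor X Y P t.

Lemma proj_tensor_lift {E : BanachSpace} (T : X -> Y -> E) M :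
  is_bilinear T -> (forall x y, bs_norm (T x y) <= M * (bs_norm x * bs_norm y)) ->
  exists L : P -> E, bounded_linear L /\ forall x y, L (t x y) = T x y.
Proof.
  intros HT HM. destruct Ht as [_ [_ Hu]]. destruct (Hu E T M HT HM) as [L [Hl [Hb [HLt _]]]].
  exists L. split; [split; [exact Hl|now exists M]|exact HLt].
Qed.

Lemma proj_tensor_ext {E : BanachSpace} (L1 L2 : P -> E) :
  bounded_linear L1 -> bounded_linear L2 ->
  (forall x y, L1 (t x y) = L2 (t x y)) -> forall z, L1 z = L2 z.
Proof.
  intros H1 H2 Heq. destruct Ht as [[Ht1 [Ht2 [Ht3 Ht4]]] [Htn Hu]].
  destruct (bounded_linear_nonneg L1 H1) as [K [HK0 HK]].
  destruct (Hu E (fun x y => L1 (t x y)) K) as [L [_ [_ [_ HLu]]]].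
  - destruct H1 as [[Ha Hs] _].
    split; [|split; [|split]]; intros; [rewrite Ht1|rewrite Ht2|rewrite Ht3|rewrite Ht4];
      auto.
  - intros x y. eapply Rle_trans; [apply HK|]. now apply Rmult_le_compat_l.
  - intro z. rewrite (HLu L1 H1 (fun x y => eq_refl) z). symmetry. now apply HLu.
Qed.

Lemma scal_inj_l {E : BanachSpace} (v : E) a b :
  v <> bs_zero -> bs_scal a v = bs_scal b v -> a = b.
Proof.
  intros Hv Hab.
  assert (Hd : bs_scal (Cadd a (Copp b)) v = bs_zero).
  { rewrite bs_scalDl, Hab.
    replace (Copp b) with (Cmul (Copp Cone) b) by (destruct b; apply Cx_ext; simpl; ring).
    now rewrite bs_scalA, <- opp_scalN1, bs_addN. }
  apply (f_equal bs_norm) in Hd. rewrite bs_normZ, norm0 in Hd.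
  apply Rmult_integral in Hd as [Hd|Hd]; [|now apply bs_norm_eq0 in Hd].
  apply Cmod_eq0 in Hd. destruct a, b. injection Hd; simpl; intros. apply Cx_ext; lra.
Qed.

(** Scalar functionals are compared through [p |-> f p v] for a nonzero [v];
    if there is none, [P] is trivial. *)
Lemma proj_tensor_functional_ext (f g : P -> Cx) K :
  (forall p q, f (bs_add p q) = Cadd (f p) (f q)) -> (forall a p, f (bs_scal a p) = Cmul a (f p)) ->
  (forall p q, g (bs_add p q) = Cadd (g p) (g q)) -> (forall a p, g (bs_scal a p) = Cmul a (g p)) ->
  (forall p, Cmod (f p) <= K * bs_norm p) -> (forall p, Cmod (g p) <= K * bs_norm p) ->
  (forall x y, f (t x y) = g (t x y)) -> forall p, f p = g p.
Proof.
  intros fD fZ gD gZ fK gK Hfg p.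
  destruct (classic (exists v : P, v <> bs_zero)) as [[v Hv]|Htriv].
  - assert (Hsv : forall h : P -> Cx,
               (forall p q, h (bs_add p q) = Cadd (h p) (h q)) ->
               (forall a p, h (bs_scal a p) = Cmul a (h p)) ->
               (forall p, Cmod (h p) <= K * bs_norm p) ->
               bounded_linear (fun p => bs_scal (h p) v)).
    { intros h hD hZ hK. split; [split|]; intros.
      - now rewrite hD, bs_scalDl.
      - now rewrite hZ, bs_scalA.
      - exists (K * bs_norm v). intro q. rewrite bs_normZ.
        pose proof (hK q). pose proof (norm_ge0 v). nra. }
    apply (scal_inj_l v); auto.
    apply (proj_tensor_ext (fun p => bs_scal (f p) v) (fun p => bs_scal (g p) v));
      auto. intros x y. now rewrite Hfg.
  - assert (Hp : p = bs_zero) by (apply NNPP; intro; apply Htriv; now exists p).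
    subst p. rewrite <- (scal0l (bs_zero : P)), fZ, gZ. destruct (f bs_zero), (g bs_zero).
    apply Cx_ext; simpl; ring.
Qed.

End UniversalProperty.

Lemma tensor_map_exists {X Y X' Y' P P' : BanachSpace} (t : X -> Y -> P) (t' : X' -> Y' -> P')
    (f : X -> X') (g : Y -> Y') :
  is_proj_tensor X Y P t -> is_proj_tensor X' Y' P' t' ->
  bounded_linear f -> bounded_linear g ->
  exists L : P -> P', bounded_linear L /\ forall x y, L (t x y) = t' (f x) (g y).
Proof.
  intros Ht [[Ht1 [Ht2 [Ht3 Ht4]]] [Htn _]] Hf Hg.
  destruct (bounded_linear_nonneg f Hf) as [Kf [Kf0 HKf]].
  destruct (bounded_linear_nonneg g Hg) as [Kg [Kg0 HKg]].
  destruct Hf as [[Hf1 Hf2] _], Hg as [[Hg1 Hg2] _].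
  apply (proj_tensor_lift t Ht _ (Kf * Kg)).
  - split; [|split; [|split]]; intros.
    + now rewrite Hf1, Ht1.
    + now rewrite Hf2, Ht2.
    + now rewrite Hg1, Ht3.
    + now rewrite Hg2, Ht4.
  - intros x y. eapply Rle_trans; [apply Htn|].
    pose proof (HKf x). pose proof (HKg y).
    pose proof (norm_ge0 (f x)). pose proof (norm_ge0 (g y)).
    pose proof (norm_ge0 x). pose proof (norm_ge0 y).
    apply Rle_trans with ((Kf * bs_norm x) * (Kg * bs_norm y)); [|nra].
    apply Rmult_le_compat; auto.
Qed.

Section BimoduleMaps.
Context {C : BanachAlgebra} {Q : BanachSpace} (tQ : C -> C -> Q).
Hypothesis HQ : is_proj_tensor C C Q tQ.

Lemma tens_pi_spec : bounded_linear (tens_pi tQ) /\ forall x y, tens_pi tQ (tQ x y) = ba_mul x y.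
Proof.
  unfold tens_pi. apply epsilon_spec. apply (proj_tensor_lift tQ HQ _ 1).
  - split; [|split; [|split]]; intros;
      [apply ba_mulDl|symmetry; apply ba_scal_mull|apply ba_mulDr|symmetry; apply ba_scal_mulr].
  - intros. rewrite Rmult_1_l. apply ba_normM.
Qed.

Lemma tens_lact_spec c :
  bounded_linear (tens_lact tQ c) /\ forall x y, tens_lact tQ c (tQ x y) = tQ (ba_mul c x) y.
Proof.
  unfold tens_lact. apply epsilon_spec.
  destruct (tensor_map_exists tQ tQ (fun x => ba_mul c x) (fun y => y) HQ HQ) as [L HL];
    [apply lmul_bounded_linear| |now exists L].
  split; [split|]; auto. exists 1. intro. lra.
Qed.

End BimoduleMaps.

Lemma proj_tensor_slot_bounded_linear {X Y P : BanachSpace} (t : X -> Y -> P) (y : Y) :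
  is_proj_tensor X Y P t -> bounded_linear (fun x => t x y).
Proof.
  intros [[Ht1 [Ht2 _]] [Htn _]]. split; [split|]; auto.
  exists (bs_norm y). intro x. rewrite Rmult_comm. apply Htn.
Qed.

Lemma net_to0_le {I : DirectedSet} (f g : I -> R) K :
  0 <= K -> net_to0 f -> (forall i, 0 <= g i <= K * f i) -> net_to0 g.
Proof.
  intros K0 Hf Hle eps He.
  destruct (Hf (eps / (K + 1))) as [i0 Hi0]; [apply Rdiv_lt_0_compat; lra|].
  exists i0. intros i Hi. specialize (Hi0 i Hi). specialize (Hle i).
  assert (Heps : (K + 1) * (eps / (K + 1)) = eps) by (field; lra).
  pose proof (Rle_abs (f i)). rewrite Rabs_right by lra.
  assert (0 <= Rabs (f i)) by apply Rabs_pos. nra.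
Qed.

(** * Approximate left biprojectivity passes to retracts *)

Section Retract.
Variables (C D : BanachAlgebra) (theta : C -> Cx) (eta : D -> Cx) (S : C -> D) (j : D -> C).
Hypothesis S_bl : bounded_linear S.
Hypothesis S_mul : forall p q, S (ba_mul p q) = ba_mul (S p) (S q).

Section TensorSquare.
Context {QC QD : BanachSpace} (tC : C -> C -> QC) (tD : D -> D -> QD) (SS : QC -> QD).
Hypotheses (HC : is_proj_tensor C C QC tC) (HD : is_proj_tensor D D QD tD).
Hypotheses (SS_bl : bounded_linear SS) (SS_t : forall p q, SS (tC p q) = tD (S p) (S q)).

Lemma tens_pi_tensor_square w : tens_pi tD (SS w) = S (tens_pi tC w).
Proof.
  destruct (tens_pi_spec tC HC) as [piC_bl piC_t].
  destruct (tens_pi_spec tD HD) as [piD_bl piD_t].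
  apply (proj_tensor_ext tC HC (fun w => tens_pi tD (SS w)) (fun w => S (tens_pi tC w)));
    try apply bounded_linear_comp; auto.
  intros p q. now rewrite SS_t, piD_t, piC_t, S_mul.
Qed.

Lemma tens_lact_tensor_square c w : SS (tens_lact tC c w) = tens_lact tD (S c) (SS w).
Proof.
  destruct (tens_lact_spec tC HC c) as [lC_bl lC_t].
  destruct (tens_lact_spec tD HD (S c)) as [lD_bl lD_t].
  apply (proj_tensor_ext tC HC (fun w => SS (tens_lact tC c w))
           (fun w => tens_lact tD (S c) (SS w))); try apply bounded_linear_comp; auto.
  intros p q. now rewrite lC_t, !SS_t, lD_t, S_mul.
Qed.

End TensorSquare.

Hypothesis j_bl : bounded_linear j.
Hypothesis j_mul : forall x y, j (ba_mul x y) = ba_mul (j x) (j y).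
Hypothesis S_j : forall x, S (j x) = x.
Hypothesis eta_S : forall p, eta (S p) = theta p.

Lemma approx_left_biproj_retract : approx_left_biproj C theta -> approx_left_biproj D eta.
Proof.
  intros Hbip QD tD HD.
  destruct (proj_tensor_exists C C) as [QC [tC HC]].
  destruct (Hbip QC tC HC) as [I [rho [rho_bl [Hleft [Hright Hdiag]]]]].
  destruct (tensor_map_exists tC tD S S HC HD S_bl S_bl) as [SS [SS_bl SS_t]].
  destruct (bounded_linear_nonneg SS SS_bl) as [K [K0 HK]].
  assert (SS_sub : forall u v, 0 <= bs_norm (bs_sub (SS u) (SS v)) <= K * bs_norm (bs_sub u v)).
  { intros u v. rewrite <- linB by apply SS_bl. split; [apply norm_ge0|apply HK]. }
  exists I, (fun i x => SS (rho i (j x))). split; [|split; [|split]].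
  - intro i. apply bounded_linear_comp; [apply bounded_linear_comp|]; auto.
  - intros c x. apply (net_to0_le _ _ K K0 (Hleft (j c) (j x))). intro i.
    replace (tens_lact tD c (SS (rho i (j x)))) with (SS (tens_lact tC (j c) (rho i (j x))))
      by (rewrite (tens_lact_tensor_square tC tD SS); auto; now rewrite S_j).
    rewrite j_mul. apply SS_sub.
  - intros c x. apply (net_to0_le _ _ K K0 (Hright (j c) (j x))). intro i.
    replace (eta c) with (theta (j c)) by now rewrite <- eta_S, S_j.
    rewrite j_mul, <- (proj2 (proj1 SS_bl)). apply SS_sub.
  - intro x. eapply net_to0_le with (K := 1); [lra|apply (Hdiag (j x))|]. intro i.
    replace (eta x) with (theta (j x)) by now rewrite <- eta_S, S_j.
    rewrite (tens_pi_tensor_square tC tD SS), eta_S by auto. split; [apply Cmod_ge0|lra].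
Qed.

End Retract.

(** * The slice map of [A (x)_p B] along a character of [B] *)

Section Slice.
Variables (A B P : BanachAlgebra) (t : A -> B -> P) (psi : B -> Cx).
Hypothesis Ht : is_proj_tensor A B P t.
Hypothesis Hpsi : is_character B psi.

Lemma slice_exists :
  exists S : P -> A, bounded_linear S /\ forall a b, S (t a b) = bs_scal (psi b) a.
Proof.
  destruct Hpsi as [psiD [psiZ _]].
  apply (proj_tensor_lift t Ht _ 1).
  - split; [|split; [|split]]; intros.
    + apply bs_scalDr.
    + now rewrite <- !bs_scalA, Cmul_comm.
    + rewrite psiD. apply bs_scalDl.
    + now rewrite psiZ, bs_scalA.
  - intros a b. rewrite bs_normZ, Rmult_1_l.
    pose proof (character_contractive B psi Hpsi b). pose proof (norm_ge0 a). nra.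
Qed.

Variable S : P -> A.
Hypothesis S_bl : bounded_linear S.
Hypothesis S_t : forall a b, S (t a b) = bs_scal (psi b) a.

Lemma slice_mul :
  (forall a b c d, ba_mul (t a b) (t c d) = t (ba_mul a c) (ba_mul b d)) ->
  forall p q, S (ba_mul p q) = ba_mul (S p) (S q).
Proof.
  intro Pmul. destruct Hpsi as [_ [_ [psiM _]]].
  assert (Helem : forall c d p, S (ba_mul p (t c d)) = ba_mul (S p) (S (t c d))).
  { intros c d.
    apply (proj_tensor_ext t Ht (fun p => S (ba_mul p (t c d)))
             (fun p => ba_mul (S p) (S (t c d)))).
    - apply (bounded_linear_comp (fun p => ba_mul p (t c d))); auto using rmul_bounded_linear.
    - apply (bounded_linear_comp S (fun a => ba_mul a (S (t c d)))); auto using rmul_bounded_linear.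
    - intros a b. rewrite Pmul, !S_t, psiM.
      now rewrite <- ba_scal_mull, <- ba_scal_mulr, bs_scalA. }
  intro p. apply (proj_tensor_ext t Ht (fun q => S (ba_mul p q)) (fun q => ba_mul (S p) (S q))).
  - apply (bounded_linear_comp (fun q => ba_mul p q)); auto using lmul_bounded_linear.
  - apply (bounded_linear_comp S (fun a => ba_mul (S p) a)); auto using lmul_bounded_linear.
  - intros. apply Helem.
Qed.

Lemma character_slice (phi : A -> Cx) (chi : P -> Cx) :
  is_character A phi -> is_character P chi ->
  (forall a b, chi (t a b) = Cmul (phi a) (psi b)) -> forall p, phi (S p) = chi p.
Proof.
  intros Hphi Hchi Hchit.
  pose proof Hphi as [phiD [phiZ _]]. pose proof Hchi as [chiD [chiZ _]].
  destruct (bounded_linear_nonneg S S_bl) as [K [K0 HK]].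
  apply (proj_tensor_functional_ext t Ht _ _ (K + 1)); intros; auto.
  - now rewrite (proj1 (proj1 S_bl)).
  - now rewrite (proj2 (proj1 S_bl)).
  - pose proof (character_contractive A phi Hphi (S p)). pose proof (HK p).
    pose proof (norm_ge0 p). nra.
  - pose proof (character_contractive P chi Hchi p). pose proof (norm_ge0 p). nra.
  - now rewrite S_t, phiZ, Hchit, Cmul_comm.
Qed.

End Slice.

Theorem theorem2p9 (A B P : BanachAlgebra) (t : A -> B -> P)
    (phi : A -> Cx) (psi : B -> Cx) (chi : P -> Cx) :
  is_proj_tensor_alg A B P t ->
  is_character A phi ->
  is_character B psi ->
  is_character P chi ->
  (forall a b, chi (t a b) = Cmul (phi a) (psi b)) ->
  (exists e : A, forall a : A, ba_mul e a = a /\ ba_mul a e = a) ->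
  (exists x0 : B, ba_mul x0 x0 = x0 /\ psi x0 = Cone) ->
  approx_left_biproj P chi ->
  approx_left_biproj A phi.
Proof.
  intros [Ht Pmul] Hphi Hpsi Hchi Hchit _ [x0 [Hx0 Hpsi_x0]].
  destruct (slice_exists A B P t psi Ht Hpsi) as [S [S_bl S_t]].
  apply (approx_left_biproj_retract P A chi phi S (fun a => t a x0)).
  - exact S_bl.
  - now apply (slice_mul A B P t psi Ht Hpsi S S_bl S_t).
  - now apply proj_tensor_slot_bounded_linear.
  - intros a c. now rewrite Pmul, Hx0.
  - intro a. now rewrite S_t, Hpsi_x0, bs_scal1.
  - now apply (character_slice A B P t psi Ht S S_bl S_t).
Qed.
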